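(* Let $f \in \mathcal{C}_{2\pi}$, let $A_n[f]$ be the Toeplitz matrix generated by $f$ and $c_n[f]$ the optimal circulant preconditioner for $A_n[f]$. Assume that $\sin c_n[f]$ is invertible for every $n$ and that there is a constant $C$ with $\|(\sin c_n[f])^{-1}\|_2\le C$ for all $n$. Then for every $\epsilon>0$ there exist positive integers $N$ and $M$ such that for every $n>N$ there are matrices $\overline{\mathcal R}_n[f],\overline{\mathcal E}_n[f]\in\mathbb{C}^{n\times n}$ with \[ \big[(\sin c_n[f])^{-1}\sin A_n[f]\big]^{*}\big[(\sin c_n[f])^{-1}\sin A_n[f]\big] = I_n+\overline{\mathcal R}_n[f]+\overline{\mathcal E}_n[f],\quad \operatorname{rank}\overline{\mathcal R}_n[f]\le 4M,\quad \|\overline{\mathcal E}_n[f]\|_2\le\epsilon. \]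
   Context: $\mathcal{C}_{2\pi}$ denotes the Banach space of all $2\pi$-periodic continuous complex-valued functions on $\mathbb{R}$ with the supremum norm $\|\cdot\|_\infty$. For $f\in\mathcal{C}_{2\pi}$ its Fourier coefficients are $a_k=\frac{1}{2\pi}\int_{-\pi}^{\pi} f(\theta)e^{-\mathbf{i}k\theta}\,d\theta$, $k\in\mathbb{Z}$. The Toeplitz matrix generated by $f$ is the $n\times n$ matrix $A_n[f]$ whose $(j,k)$ entry is $a_{j-k}$. The optimal circulant preconditioner $c_n[f]$ is the $n\times n$ circulant matrix whose $(j,k)$ entry is $c_{(j-k)\bmod n}$, where $c_k=\frac{(n-k)a_k+k\,a_{k-n}}{n}$ for $0\le k<n$. For a square matrix $X$, $\sin X=\sum_{m\ge0}\frac{(-1)^m}{(2m+1)!}X^{2m+1}$; $X^*$ is the conjugate transpose. $I_n$ is the $n\times n$ identity and $\|\cdot\|_2$ is the spectral norm. *)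

(* classical reals, complex numbers as pairs of reals,
   n x n complex matrices as functions nat -> nat -> Cx (only indices < n matter). *)
From Stdlib Require Import Reals Lra ZArith List.
Open Scope R_scope.

Definition Cx : Type := (R * R)%type.
Definition Cre (z : Cx) : R := fst z.
Definition Cim (z : Cx) : R := snd z.
Definition RtoC (x : R) : Cx := (x, 0).
Definition C0 : Cx := (0, 0).
Definition C1 : Cx := (1, 0).
Definition Cadd (z w : Cx) : Cx := (fst z + fst w, snd z + snd w).
Definition Cmul (z w : Cx) : Cx :=
  (fst z * fst w - snd z * snd w, fst z * snd w + snd z * fst w).
Definition Cscale (r : R) (z : Cx) : Cx := (r * fst z, r * snd z).
Definition Cconj (z : Cx) : Cx := (fst z, - snd z).
Definition Cnorm2 (z : Cx) : R := fst z * fst z + snd z * snd z.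

Fixpoint Csum (n : nat) (F : nat -> Cx) : Cx :=
  match n with
  | O => C0
  | S m => Cadd (Csum m F) (F m)
  end.

Fixpoint Rsum (n : nat) (F : nat -> R) : R :=
  match n with
  | O => 0
  | S m => Rsum m F + F m
  end.

Definition in_C2pi (f : R -> Cx) : Prop :=
  continuity (fun t => Cre (f t)) /\ continuity (fun t => Cim (f t)) /\
  forall t, f (t + 2 * PI) = f t.

Definition cexp_neg (k : Z) (t : R) : Cx := (cos (IZR k * t), - sin (IZR k * t)).

Definition is_fourier_coeff (f : R -> Cx) (k : Z) (a : Cx) : Prop :=
  (exists pr : Riemann_integrable (fun t => Cre (Cmul (f t) (cexp_neg k t))) (- PI) PI,
      RiemannInt pr = 2 * PI * Cre a) /\
  (exists pr : Riemann_integrable (fun t => Cim (Cmul (f t) (cexp_neg k t))) (- PI) PI,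
      RiemannInt pr = 2 * PI * Cim a).

Definition Mat : Type := nat -> nat -> Cx.
Definition Vec : Type := nat -> Cx.

Definition mmul (n : nat) (A B : Mat) : Mat :=
  fun i j => Csum n (fun l => Cmul (A i l) (B l j)).
Definition mid : Mat := fun i j => if Nat.eqb i j then C1 else C0.
Fixpoint mpow (n : nat) (X : Mat) (k : nat) : Mat :=
  match k with
  | O => mid
  | S k' => mmul n X (mpow n X k')
  end.
Definition madj (X : Mat) : Mat := fun i j => Cconj (X j i).

Definition meq (n : nat) (A B : Mat) : Prop :=
  forall i j, (i < n)%nat -> (j < n)%nat -> A i j = B i j.

Definition toeplitz (a : Z -> Cx) : Mat :=
  fun j k => a (Z.of_nat j - Z.of_nat k)%Z.

Definition circ_coeff (n : nat) (a : Z -> Cx) (k : nat) : Cx :=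
  Cscale (/ INR n)
    (Cadd (Cscale (INR n - INR k) (a (Z.of_nat k)))
          (Cscale (INR k) (a (Z.of_nat k - Z.of_nat n)%Z))).
Definition opt_circulant (n : nat) (a : Z -> Cx) : Mat :=
  fun j k => circ_coeff n a (Z.to_nat ((Z.of_nat j - Z.of_nat k) mod Z.of_nat n)).

Definition sin_partial (n : nat) (X : Mat) (N : nat) : Mat :=
  fun i j => Csum (S N) (fun m =>
     Cscale ((-1) ^ m / INR (fact (2 * m + 1))) (mpow n X (2 * m + 1) i j)).
Definition is_msin (n : nat) (X Sx : Mat) : Prop :=
  forall i j, (i < n)%nat -> (j < n)%nat ->
    Un_cv (fun N => Cre (sin_partial n X N i j)) (Cre (Sx i j)) /\
    Un_cv (fun N => Cim (sin_partial n X N i j)) (Cim (Sx i j)).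

Definition is_inverse (n : nat) (X Y : Mat) : Prop :=
  meq n (mmul n X Y) mid /\ meq n (mmul n Y X) mid.

Definition vnorm (n : nat) (v : Vec) : R := sqrt (Rsum n (fun i => Cnorm2 (v i))).
Definition mvmul (n : nat) (X : Mat) (v : Vec) : Vec :=
  fun i => Csum n (fun l => Cmul (X i l) (v l)).
Definition opnorm_le (n : nat) (X : Mat) (c : R) : Prop :=
  forall v : Vec, vnorm n (mvmul n X v) <= c * vnorm n v.

Definition rank_le (n : nat) (X : Mat) (r : nat) : Prop :=
  exists u : nat -> Vec, forall k, (k < n)%nat ->
    exists coef : nat -> Cx, forall i, (i < n)%nat ->
      X i k = Csum r (fun l => Cmul (coef l) (u l i)).

Definition madd (A B : Mat) : Mat := fun i j => Cadd (A i j) (B i j).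

(** Approximating f uniformly by a Fejér mean p of degree m splits A_n[f] - c_n[f]
    into A_n[f - p] - c_n[f - p], whose norm is at most sup |f - p| (Toeplitz
    matrices are compressions of multiplication operators, and c_n is an average
    of cyclic shifts of A_n), a band whose entries are O(1/n), and a matrix
    supported on 2m rows.  Expanding sin in its power series, each X^k - Y^k
    telescopes into k products containing one factor X - Y, and the series tail is
    uniformly small because ||A_n[f]|| and ||c_n[f]|| are bounded by sup |f|; so
    sin A_n[f] - sin c_n[f] is again low rank plus small.  Finally, with
    G = (sin c_n[f])^{-1} (sin A_n[f] - sin c_n[f]), the product in question is
    (I + G)^* (I + G) = I + G + G^* + G^* G, and each of the three perturbation
    terms splits the same way, which accounts for the rank bound 4M. *)

From Coquelicot Require Import Coquelicot.
From Stdlib Require Import Reals Lra Lia ZArith Arith FunctionalExtensionality.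
(* Imported last so that [Defs.C1] shadows [Cos_rel.C1] from Reals. *)
From Pilot Require Import Defs.
Open Scope R_scope.

Ltac cx_ring := unfold Cadd, Cmul, Cscale, Cconj, C0, C1, RtoC, Cre, Cim in *;
  apply injective_projections; simpl; ring.

Lemma Csum_ext n F G : (forall l, (l < n)%nat -> F l = G l) -> Csum n F = Csum n G.
Proof.
  induction n; intros H; simpl; auto.
  rewrite IHn by (intros; apply H; lia). rewrite H by lia; auto.
Qed.

Lemma Rsum_ext n F G : (forall l, (l < n)%nat -> F l = G l) -> Rsum n F = Rsum n G.
Proof.
  induction n; intros H; simpl; auto.
  rewrite IHn by (intros; apply H; lia). rewrite H by lia; auto.
Qed.

Lemma fst_Csum n F : fst (Csum n F) = Rsum n (fun l => fst (F l)).
Proof. induction n; simpl; auto. rewrite IHn; auto. Qed.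

Lemma snd_Csum n F : snd (Csum n F) = Rsum n (fun l => snd (F l)).
Proof. induction n; simpl; auto. rewrite IHn; auto. Qed.

Lemma Csum_add n F G : Csum n (fun l => Cadd (F l) (G l)) = Cadd (Csum n F) (Csum n G).
Proof. induction n; simpl. cx_ring. rewrite IHn. cx_ring. Qed.

Lemma Csum_mul_l n c F : Csum n (fun l => Cmul c (F l)) = Cmul c (Csum n F).
Proof. induction n; simpl. cx_ring. rewrite IHn. cx_ring. Qed.

Lemma Csum_mul_r n c F : Csum n (fun l => Cmul (F l) c) = Cmul (Csum n F) c.
Proof. induction n; simpl. cx_ring. rewrite IHn. cx_ring. Qed.

Lemma Csum_scale n r F : Csum n (fun l => Cscale r (F l)) = Cscale r (Csum n F).
Proof. induction n; simpl. cx_ring. rewrite IHn. cx_ring. Qed.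

Lemma Csum_zero n : Csum n (fun _ => C0) = C0.
Proof. induction n; simpl; auto. rewrite IHn. cx_ring. Qed.

Lemma Csum_const m x : Csum m (fun _ => x) = Cscale (INR m) x.
Proof. induction m; simpl Csum. cx_ring. rewrite IHm, S_INR. cx_ring. Qed.

Lemma Csum_swap n m F :
  Csum n (fun i => Csum m (fun j => F i j)) = Csum m (fun j => Csum n (fun i => F i j)).
Proof. induction n; simpl. symmetry; apply Csum_zero. rewrite IHn, <- Csum_add. auto. Qed.

Lemma Csum_conj n F : Cconj (Csum n F) = Csum n (fun l => Cconj (F l)).
Proof. induction n; simpl. cx_ring. rewrite <- IHn. cx_ring. Qed.

Lemma Csum_first n F : Csum (S n) F = Cadd (F O) (Csum n (fun l => F (S l))).
Proof.
  induction n. simpl. cx_ring.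
  change (Csum (S (S n)) F) with (Cadd (Csum (S n) F) (F (S n))).
  rewrite IHn. simpl. cx_ring.
Qed.

Lemma Csum_split a b F :
  Csum (a + b) F = Cadd (Csum a F) (Csum b (fun l => F (a + l)%nat)).
Proof.
  induction b. simpl. rewrite Nat.add_0_r. cx_ring.
  rewrite Nat.add_succ_r. simpl. rewrite IHb. cx_ring.
Qed.

Lemma Csum_delta n i x :
  (i < n)%nat -> Csum n (fun l => if Nat.eqb l i then x else C0) = x.
Proof.
  induction n; intros H. lia. simpl. destruct (Nat.eqb n i) eqn:E.
  - apply Nat.eqb_eq in E; subst.
    rewrite Csum_ext with (G := fun _ => C0), Csum_zero. cx_ring.
    intros l Hl. destruct (Nat.eqb l i) eqn:E2; auto. apply Nat.eqb_eq in E2; lia.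
  - apply Nat.eqb_neq in E. rewrite IHn by lia. cx_ring.
Qed.

Lemma Rsum_add n F G : Rsum n (fun l => F l + G l) = Rsum n F + Rsum n G.
Proof. induction n; simpl. ring. rewrite IHn. ring. Qed.

Lemma Rsum_scal n c F : Rsum n (fun l => c * F l) = c * Rsum n F.
Proof. induction n; simpl. ring. rewrite IHn. ring. Qed.

Lemma Rsum_zero n : Rsum n (fun _ => 0) = 0.
Proof. induction n; simpl; auto. rewrite IHn; ring. Qed.

Lemma Rsum_const m x : Rsum m (fun _ => x) = INR m * x.
Proof. induction m; simpl Rsum. simpl; ring. rewrite IHm, S_INR. ring. Qed.

Lemma Rsum_le n F G : (forall l, (l < n)%nat -> F l <= G l) -> Rsum n F <= Rsum n G.
Proof.
  induction n; intros H; simpl. lra.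
  assert (F n <= G n) by (apply H; lia).
  assert (Rsum n F <= Rsum n G) by (apply IHn; intros; apply H; lia). lra.
Qed.

Lemma Rsum_nonneg n F : (forall l, (l < n)%nat -> 0 <= F l) -> 0 <= Rsum n F.
Proof. intros H. rewrite <- (Rsum_zero n). apply Rsum_le; auto. Qed.

Lemma Rsum_ge_term N (F : nat -> R) l0 :
  (l0 < N)%nat -> (forall l, 0 <= F l) -> F l0 <= Rsum N F.
Proof.
  induction N; intros Hl HF. lia. cbn [Rsum]. destruct (Nat.eq_dec l0 N).
  - subst. assert (0 <= Rsum N F) by (apply Rsum_nonneg; auto). lra.
  - assert (F l0 <= Rsum N F) by (apply IHN; auto; lia). assert (h := HF N). lra.
Qed.

Lemma Rsum_swap n m F :
  Rsum n (fun i => Rsum m (fun j => F i j)) = Rsum m (fun j => Rsum n (fun i => F i j)).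
Proof. induction n; simpl. symmetry; apply Rsum_zero. rewrite IHn, <- Rsum_add. auto. Qed.

Lemma Rsum_first n F : Rsum (S n) F = F O + Rsum n (fun l => F (S l)).
Proof.
  induction n. simpl. ring.
  change (Rsum (S (S n)) F) with (Rsum (S n) F + F (S n)). rewrite IHn. simpl. ring.
Qed.

Lemma le_INR_of_up_le x n : (Z.to_nat (up x) <= n)%nat -> x <= INR n.
Proof.
  intros Hn. destruct (archimed x) as [Hx _].
  assert (IZR (up x) <= INR n); [|lra].
  eapply Rle_trans; [|apply le_INR, Hn]. rewrite INR_IZR_INZ. apply IZR_le. lia.
Qed.

Definition Cmod (z : Cx) : R := sqrt (Cnorm2 z).

Lemma Cnorm2_nonneg z : 0 <= Cnorm2 z.
Proof. unfold Cnorm2. nra. Qed.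

Lemma Cnorm2_mul z w : Cnorm2 (Cmul z w) = Cnorm2 z * Cnorm2 w.
Proof. unfold Cnorm2, Cmul; simpl; ring. Qed.

Lemma Cmod_nonneg z : 0 <= Cmod z.
Proof. apply sqrt_pos. Qed.

Lemma Cmod_sq z : Cmod z * Cmod z = Cnorm2 z.
Proof. apply sqrt_sqrt, Cnorm2_nonneg. Qed.

Lemma Cmod_mul z w : Cmod (Cmul z w) = Cmod z * Cmod w.
Proof. unfold Cmod. rewrite <- sqrt_mult by apply Cnorm2_nonneg. rewrite Cnorm2_mul; auto. Qed.

Lemma Cmod_conj z : Cmod (Cconj z) = Cmod z.
Proof. unfold Cmod, Cnorm2, Cconj. simpl. f_equal. ring. Qed.

Lemma Cmod_RtoC r : Cmod (RtoC r) = Rabs r.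
Proof. unfold Cmod, Cnorm2, RtoC; simpl. rewrite <- sqrt_Rsqr_abs. f_equal. unfold Rsqr; ring. Qed.

Lemma Cmod_C0 : Cmod C0 = 0.
Proof. unfold Cmod, Cnorm2, C0; simpl. rewrite Rmult_0_l, Rplus_0_l. apply sqrt_0. Qed.

Lemma fst_le_Cmod z : fst z <= Cmod z.
Proof.
  unfold Cmod, Cnorm2. destruct (Rle_or_lt (fst z) 0).
  - assert (0 <= sqrt (fst z * fst z + snd z * snd z)) by apply sqrt_pos. lra.
  - rewrite <- (sqrt_square (fst z)) at 1 by lra. apply sqrt_le_1_alt. nra.
Qed.

Lemma Cmod_le_abs_fst_snd z : Cmod z <= Rabs (fst z) + Rabs (snd z).
Proof.
  unfold Cmod, Cnorm2. assert (h1 := Rabs_pos (fst z)). assert (h2 := Rabs_pos (snd z)).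
  rewrite <- (sqrt_square (Rabs (fst z) + Rabs (snd z))) by lra. apply sqrt_le_1_alt.
  pose proof (Rsqr_abs (fst z)) as e1. pose proof (Rsqr_abs (snd z)) as e2.
  unfold Rsqr in e1, e2. nra.
Qed.

(** * Inner products and the spectral norm *)

Lemma mul_le_amgm a b lam : 0 < lam -> a * b <= (lam * (a * a) + (b * b) / lam) / 2.
Proof.
  intros Hl. assert (0 <= (lam * a - b) * (lam * a - b)) by apply Rle_0_sqr.
  replace ((lam * (a * a) + (b * b) / lam) / 2)
    with (a * b + (lam * a - b) * (lam * a - b) / (2 * lam)) by (field; lra).
  assert (0 <= (lam * a - b) * (lam * a - b) / (2 * lam)) by (apply Rle_mult_inv_pos; lra).
  lra.
Qed.

(* The converse of [mul_le_amgm]: optimising over [lam] recovers the product. *)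
Lemma le_sqrt_mul_of_amgm_bound X Y S : 0 <= X -> 0 <= Y ->
  (forall lam, 0 < lam -> S <= (lam * X + Y / lam) / 2) -> S <= sqrt X * sqrt Y.
Proof.
  intros HX HY H. assert (ha := sqrt_pos X). assert (hb := sqrt_pos Y).
  assert (ea := sqrt_sqrt X HX). assert (eb := sqrt_sqrt Y HY).
  revert ha hb ea eb. generalize (sqrt X) (sqrt Y). intros a b ha hb ea eb. subst X Y.
  destruct (Rle_lt_or_eq_dec 0 a ha) as [pa|za]; destruct (Rle_lt_or_eq_dec 0 b hb) as [pb|zb].
  - specialize (H (b / a) ltac:(apply Rdiv_lt_0_compat; auto)).
    replace ((b / a * (a * a) + b * b / (b / a)) / 2) with (a * b) in H by (field; lra). lra.
  - subst b. destruct (Rle_or_lt S 0). lra.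
    specialize (H (S / (a * a + 1)) ltac:(apply Rdiv_lt_0_compat; nra)).
    assert (S / (a * a + 1) * (a * a) < S).
    { apply Rmult_lt_reg_r with (a * a + 1). nra. field_simplify; nra. }
    replace (0 * 0 / (S / (a * a + 1))) with 0 in H by (field; split; nra). lra.
  - subst a. destruct (Rle_or_lt S 0). lra.
    specialize (H (b * b / S + 1)
      ltac:(apply Rplus_le_lt_0_compat; [apply Rle_mult_inv_pos; nra | lra])).
    assert (e : b * b / (b * b / S + 1) = S * (b * b / (b * b + S))) by (field; split; nra).
    assert (b * b / (b * b + S) < 1).
    { apply (Rmult_lt_reg_r (b * b + S)). nra.
      rewrite Rmult_1_l; unfold Rdiv; rewrite Rmult_assoc, Rinv_l; nra. }
    assert (0 <= b * b / (b * b + S)) by (apply Rle_mult_inv_pos; nra).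
    replace ((b * b / S + 1) * (0 * 0)) with 0 in H by ring. rewrite e in H. nra.
  - subst. destruct (Rle_or_lt S 0). lra. specialize (H 1 ltac:(lra)). lra.
Qed.

Definition cdot (n : nat) (w v : Vec) : Cx := Csum n (fun i => Cmul (Cconj (w i)) (v i)).
Definition vnorm2 (n : nat) (v : Vec) : R := Rsum n (fun i => Cnorm2 (v i)).

Lemma vnorm2_nonneg n v : 0 <= vnorm2 n v.
Proof. apply Rsum_nonneg; intros; apply Cnorm2_nonneg. Qed.

Lemma fst_cdot_self n v : fst (cdot n v v) = vnorm2 n v.
Proof.
  unfold cdot, vnorm2. rewrite fst_Csum.
  apply Rsum_ext; intros. unfold Cmul, Cconj, Cnorm2; simpl; ring.
Qed.

Lemma vnorm_ext n u u' : (forall i, (i < n)%nat -> u i = u' i) -> vnorm n u = vnorm n u'.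
Proof. intros H; unfold vnorm; f_equal; apply Rsum_ext; intros; rewrite H; auto. Qed.

Lemma vnorm_sq n v : vnorm n v * vnorm n v = vnorm2 n v.
Proof. apply sqrt_sqrt, vnorm2_nonneg. Qed.

Lemma vnorm_nonneg n v : 0 <= vnorm n v.
Proof. apply sqrt_pos. Qed.

Lemma fst_cdot_amgm n w v lam :
  0 < lam -> fst (cdot n w v) <= (lam * vnorm2 n w + vnorm2 n v / lam) / 2.
Proof.
  intros Hl. unfold cdot, vnorm2. rewrite fst_Csum.
  replace ((lam * Rsum n (fun i => Cnorm2 (w i)) + Rsum n (fun i => Cnorm2 (v i)) / lam) / 2)
    with (Rsum n (fun i => (lam * Cnorm2 (w i) + Cnorm2 (v i) / lam) / 2)).
  - apply Rsum_le; intros l _. unfold Cmul, Cconj, Cnorm2; simpl.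
    pose proof (mul_le_amgm (fst (w l)) (fst (v l)) lam Hl).
    pose proof (mul_le_amgm (snd (w l)) (snd (v l)) lam Hl).
    replace ((lam * (fst (w l) * fst (w l) + snd (w l) * snd (w l))
              + (fst (v l) * fst (v l) + snd (v l) * snd (v l)) / lam) / 2)
      with ((lam * (fst (w l) * fst (w l)) + fst (v l) * fst (v l) / lam) / 2
            + (lam * (snd (w l) * snd (w l)) + snd (v l) * snd (v l) / lam) / 2)
      by (field; lra).
    lra.
  - rewrite (Rsum_ext n _ (fun i => lam / 2 * Cnorm2 (w i) + / (2 * lam) * Cnorm2 (v i)))
      by (intros; field; lra).
    rewrite Rsum_add, !Rsum_scal. field; lra.
Qed.

Lemma fst_cdot_le n w v : fst (cdot n w v) <= vnorm n w * vnorm n v.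
Proof.
  apply le_sqrt_mul_of_amgm_bound; try apply vnorm2_nonneg. intros; apply fst_cdot_amgm; auto.
Qed.

Lemma cdot_add_r n w u u' :
  cdot n w (fun i => Cadd (u i) (u' i)) = Cadd (cdot n w u) (cdot n w u').
Proof. unfold cdot. rewrite <- Csum_add. apply Csum_ext; intros; cx_ring. Qed.

Lemma cdot_add_l n w w' u :
  cdot n (fun i => Cadd (w i) (w' i)) u = Cadd (cdot n w u) (cdot n w' u).
Proof. unfold cdot. rewrite <- Csum_add. apply Csum_ext; intros; cx_ring. Qed.

Lemma fst_cdot_sym n w v : fst (cdot n w v) = fst (cdot n v w).
Proof. unfold cdot. rewrite !fst_Csum. apply Rsum_ext; intros; unfold Cmul, Cconj; simpl; ring. Qed.

Lemma vnorm_add n u u' : vnorm n (fun i => Cadd (u i) (u' i)) <= vnorm n u + vnorm n u'.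
Proof.
  set (s := fun i => Cadd (u i) (u' i)).
  assert (e1 := vnorm_sq n u). assert (e2 := vnorm_sq n u'). assert (e3 := vnorm_sq n s).
  assert (h1 := vnorm_nonneg n u). assert (h2 := vnorm_nonneg n u'). assert (h3 := vnorm_nonneg n s).
  assert (hc := fst_cdot_le n u u').
  assert (vnorm2 n s = vnorm2 n u + vnorm2 n u' + 2 * fst (cdot n u u')).
  { unfold s. rewrite <- !fst_cdot_self, cdot_add_l, !cdot_add_r.
    unfold Cadd at 1 2 3; simpl. rewrite (fst_cdot_sym n u' u). ring. }
  nra.
Qed.

Lemma vnorm_scale n z u : vnorm n (fun i => Cmul z (u i)) = Cmod z * vnorm n u.
Proof.
  unfold vnorm, Cmod. rewrite <- sqrt_mult by (apply Cnorm2_nonneg || apply vnorm2_nonneg).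
  f_equal. rewrite <- Rsum_scal. apply Rsum_ext; intros; apply Cnorm2_mul.
Qed.

Definition mscale (z : Cx) (X : Mat) : Mat := fun i j => Cmul z (X i j).
Definition msub (X Y : Mat) : Mat := madd X (mscale (RtoC (-1)) Y).
Definition mzero : Mat := fun _ _ => C0.

Lemma meq_refl n A : meq n A A.
Proof. intros i j _ _; auto. Qed.

Lemma meq_trans n A B C : meq n A B -> meq n B C -> meq n A C.
Proof. intros H1 H2 i j Hi Hj; rewrite H1; auto. Qed.

Lemma meq_mmul n A A' B B' : meq n A A' -> meq n B B' -> meq n (mmul n A B) (mmul n A' B').
Proof. intros H1 H2 i j Hi Hj. unfold mmul. apply Csum_ext; intros. rewrite H1, H2; auto. Qed.

Lemma meq_madd n A A' B B' : meq n A A' -> meq n B B' -> meq n (madd A B) (madd A' B').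
Proof. intros H1 H2 i j Hi Hj. unfold madd. rewrite H1, H2; auto. Qed.

Lemma meq_madj n A A' : meq n A A' -> meq n (madj A) (madj A').
Proof. intros H1 i j Hi Hj. unfold madj. rewrite H1; auto. Qed.

Lemma mmul_madd_l n A B C : mmul n (madd A B) C = madd (mmul n A C) (mmul n B C).
Proof.
  extensionality i; extensionality j. unfold mmul, madd.
  rewrite <- Csum_add. apply Csum_ext; intros; cx_ring.
Qed.

Lemma mmul_madd_r n A B C : mmul n A (madd B C) = madd (mmul n A B) (mmul n A C).
Proof.
  extensionality i; extensionality j. unfold mmul, madd.
  rewrite <- Csum_add. apply Csum_ext; intros; cx_ring.
Qed.

Lemma mmul_mscale_l n z A B : mmul n (mscale z A) B = mscale z (mmul n A B).
Proof.
  extensionality i; extensionality j. unfold mmul, mscale.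
  rewrite <- Csum_mul_l. apply Csum_ext; intros; cx_ring.
Qed.

Lemma mmul_mscale_r n z A B : mmul n A (mscale z B) = mscale z (mmul n A B).
Proof.
  extensionality i; extensionality j. unfold mmul, mscale.
  rewrite <- Csum_mul_l. apply Csum_ext; intros; cx_ring.
Qed.

Lemma madj_madd A B : madj (madd A B) = madd (madj A) (madj B).
Proof. extensionality i; extensionality j. unfold madj, madd. cx_ring. Qed.

Lemma madj_mid : madj mid = mid.
Proof.
  extensionality i; extensionality j. unfold madj, mid.
  rewrite Nat.eqb_sym. destruct (Nat.eqb i j); cx_ring.
Qed.

Lemma mvmul_mid n v i : (i < n)%nat -> mvmul n mid v i = v i.
Proof.
  intros Hi. unfold mvmul, mid. rewrite <- (Csum_delta n i (v i) Hi).
  apply Csum_ext; intros l _. rewrite Nat.eqb_sym.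
  destruct (Nat.eqb l i) eqn:E; [apply Nat.eqb_eq in E; subst|]; cx_ring.
Qed.

Lemma mmul_mid_l n A : meq n (mmul n mid A) A.
Proof.
  intros i j Hi Hj. unfold mmul. rewrite <- (Csum_delta n i (A i j) Hi).
  apply Csum_ext; intros l _. unfold mid. rewrite Nat.eqb_sym.
  destruct (Nat.eqb l i) eqn:E; [apply Nat.eqb_eq in E; subst|]; cx_ring.
Qed.

Lemma mmul_mid_r n A : meq n (mmul n A mid) A.
Proof.
  intros i j Hi Hj. unfold mmul. rewrite <- (Csum_delta n j (A i j) Hj).
  apply Csum_ext; intros l _. unfold mid.
  destruct (Nat.eqb l j) eqn:E; [apply Nat.eqb_eq in E; subst|]; cx_ring.
Qed.

Lemma mvmul_madd n A B v i : mvmul n (madd A B) v i = Cadd (mvmul n A v i) (mvmul n B v i).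
Proof. unfold mvmul, madd. rewrite <- Csum_add. apply Csum_ext; intros; cx_ring. Qed.

Lemma mvmul_mscale n z A v i : mvmul n (mscale z A) v i = Cmul z (mvmul n A v i).
Proof. unfold mvmul, mscale. rewrite <- Csum_mul_l. apply Csum_ext; intros; cx_ring. Qed.

Lemma mvmul_mmul n A B v i : mvmul n (mmul n A B) v i = mvmul n A (mvmul n B v) i.
Proof.
  unfold mvmul, mmul.
  transitivity (Csum n (fun l => Csum n (fun k => Cmul (A i k) (Cmul (B k l) (v l))))).
  - apply Csum_ext; intros. rewrite <- Csum_mul_r. apply Csum_ext; intros; cx_ring.
  - rewrite Csum_swap. apply Csum_ext; intros. rewrite <- Csum_mul_l. auto.
Qed.

Lemma cdot_madj n X w v : cdot n w (mvmul n (madj X) v) = cdot n (mvmul n X w) v.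
Proof.
  unfold cdot, mvmul, madj.
  transitivity (Csum n (fun i => Csum n (fun k =>
                  Cmul (Cmul (Cconj (w i)) (Cconj (X k i))) (v k)))).
  - apply Csum_ext; intros. rewrite <- Csum_mul_l. apply Csum_ext; intros; cx_ring.
  - rewrite Csum_swap. apply Csum_ext; intros.
    rewrite Csum_conj, <- Csum_mul_r. apply Csum_ext; intros; cx_ring.
Qed.

Lemma opnorm_ext n X Y c : meq n X Y -> opnorm_le n X c -> opnorm_le n Y c.
Proof.
  intros E H v. rewrite (vnorm_ext n (mvmul n Y v) (mvmul n X v)). apply H.
  intros i Hi. unfold mvmul. apply Csum_ext; intros. rewrite E; auto.
Qed.

Lemma opnorm_mono n A a b : a <= b -> opnorm_le n A a -> opnorm_le n A b.
Proof.
  intros Hab HA v. eapply Rle_trans. apply HA. apply Rmult_le_compat_r; auto. apply vnorm_nonneg.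
Qed.

Lemma opnorm_add n A B a b :
  opnorm_le n A a -> opnorm_le n B b -> opnorm_le n (madd A B) (a + b).
Proof.
  intros HA HB v. rewrite (vnorm_ext n _ (fun i => Cadd (mvmul n A v i) (mvmul n B v i)))
    by (intros; apply mvmul_madd).
  eapply Rle_trans. apply vnorm_add. specialize (HA v); specialize (HB v). lra.
Qed.

Lemma opnorm_scale n z A a : opnorm_le n A a -> opnorm_le n (mscale z A) (Cmod z * a).
Proof.
  intros HA v. rewrite (vnorm_ext n _ (fun i => Cmul z (mvmul n A v i)))
    by (intros; apply mvmul_mscale).
  rewrite vnorm_scale, Rmult_assoc. apply Rmult_le_compat_l. apply Cmod_nonneg. apply HA.
Qed.

Lemma opnorm_msub n A B a b :
  opnorm_le n A a -> opnorm_le n B b -> opnorm_le n (msub A B) (a + b).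
Proof.
  intros HA HB. apply opnorm_add; auto.
  replace b with (Cmod (RtoC (-1)) * b) by (rewrite Cmod_RtoC, Rabs_m1; ring).
  apply opnorm_scale; auto.
Qed.

Lemma opnorm_mmul n A B a b :
  0 <= a -> opnorm_le n A a -> opnorm_le n B b -> opnorm_le n (mmul n A B) (a * b).
Proof.
  intros Ha HA HB v. rewrite (vnorm_ext n _ (mvmul n A (mvmul n B v))) by (intros; apply mvmul_mmul).
  eapply Rle_trans. apply HA. rewrite Rmult_assoc. apply Rmult_le_compat_l; auto.
Qed.

Lemma opnorm_mzero n : opnorm_le n mzero 0.
Proof.
  intros v. rewrite Rmult_0_l. unfold vnorm. rewrite <- sqrt_0. apply sqrt_le_1_alt.
  rewrite <- (Rsum_zero n). apply Rsum_le. intros l _.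
  unfold mvmul, mzero. rewrite (Csum_ext n _ (fun _ => C0)) by (intros; cx_ring).
  rewrite Csum_zero. unfold Cnorm2, C0; simpl; lra.
Qed.

Lemma opnorm_mid n : opnorm_le n mid 1.
Proof. intros v. rewrite (vnorm_ext n _ v) by (intros; apply mvmul_mid; auto). lra. Qed.

Lemma opnorm_mpow n Y K : 0 <= K -> opnorm_le n Y K -> forall k, opnorm_le n (mpow n Y k) (K ^ k).
Proof. intros HK HY k. induction k; simpl. apply opnorm_mid. apply opnorm_mmul; auto. Qed.

(* Equivalent to [opnorm_le] for [c >= 0] (see the two lemmas below), but it only
   involves [Re <w, X v>], so it survives averaging and integration. *)
Definition form_bound (n : nat) (X : Mat) (c : R) : Prop :=
  forall v w lam, 0 < lam ->
    fst (cdot n w (mvmul n X v)) <= c / 2 * (lam * vnorm2 n w + vnorm2 n v / lam).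

Lemma opnorm_le_of_form_bound n X c : 0 <= c -> form_bound n X c -> opnorm_le n X c.
Proof.
  intros Hc H v. set (u := mvmul n X v).
  assert (S : vnorm2 n u <= sqrt (c * vnorm2 n u) * sqrt (c * vnorm2 n v)).
  { apply le_sqrt_mul_of_amgm_bound; try (apply Rmult_le_pos; auto; apply vnorm2_nonneg).
    intros lam Hl. specialize (H v u lam Hl). rewrite fst_cdot_self in H. fold u in H.
    replace ((lam * (c * vnorm2 n u) + c * vnorm2 n v / lam) / 2)
      with (c / 2 * (lam * vnorm2 n u + vnorm2 n v / lam)) by (field; lra). auto. }
  rewrite !sqrt_mult in S by (auto; apply vnorm2_nonneg).
  assert (ec := sqrt_sqrt c Hc).
  assert (e1 := vnorm_sq n u). assert (h1 := vnorm_nonneg n u). assert (h2 := vnorm_nonneg n v).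
  change (sqrt (vnorm2 n u)) with (vnorm n u) in S. change (sqrt (vnorm2 n v)) with (vnorm n v) in S.
  assert (Hu : vnorm n u * vnorm n u <= c * (vnorm n u * vnorm n v))
    by (rewrite e1; replace (c * (vnorm n u * vnorm n v))
                      with (sqrt c * sqrt c * vnorm n u * vnorm n v) by (rewrite ec; ring); nra).
  destruct (Rle_lt_or_eq_dec 0 _ h1) as [Hpos|Hz].
  - apply Rmult_le_reg_l with (vnorm n u); auto. nra.
  - rewrite <- Hz. apply Rmult_le_pos; auto.
Qed.

Lemma form_bound_of_opnorm_le n X c : 0 <= c -> opnorm_le n X c -> form_bound n X c.
Proof.
  intros Hc H v w lam Hl. eapply Rle_trans. apply fst_cdot_le.
  eapply Rle_trans. apply Rmult_le_compat_l. apply vnorm_nonneg. apply (H v).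
  pose proof (mul_le_amgm (vnorm n w) (vnorm n v) lam Hl) as Ham. rewrite !vnorm_sq in Ham.
  replace (vnorm n w * (c * vnorm n v)) with (c * (vnorm n w * vnorm n v)) by ring.
  replace (c / 2 * (lam * vnorm2 n w + vnorm2 n v / lam))
    with (c * ((lam * vnorm2 n w + vnorm2 n v / lam) / 2)) by (field; lra).
  apply Rmult_le_compat_l; auto.
Qed.

Lemma opnorm_madj n X c : 0 <= c -> opnorm_le n X c -> opnorm_le n (madj X) c.
Proof.
  intros Hc H. apply opnorm_le_of_form_bound; auto. intros v w lam Hl.
  rewrite cdot_madj, fst_cdot_sym.
  replace (lam * vnorm2 n w + vnorm2 n v / lam)
    with (/ lam * vnorm2 n v + vnorm2 n w / / lam) by (field; lra).
  apply form_bound_of_opnorm_le; auto. apply Rinv_0_lt_compat; auto.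
Qed.

(** * Low-rank matrices *)

Definition low_rank (n r : nat) (X : Mat) : Prop :=
  exists u w : nat -> Vec, meq n X (fun i j => Csum r (fun l => Cmul (u l i) (Cconj (w l j)))).

Lemma rank_le_of_low_rank n r X : low_rank n r X -> rank_le n X r.
Proof.
  intros [u [w H]]. exists u. intros k Hk. exists (fun l => Cconj (w l k)). intros i Hi.
  rewrite H by auto. apply Csum_ext; intros; cx_ring.
Qed.

Lemma low_rank_mzero n r : low_rank n r mzero.
Proof.
  exists (fun _ _ => C0), (fun _ _ => C0). intros i j _ _. unfold mzero.
  rewrite (Csum_ext r _ (fun _ => C0)) by (intros; cx_ring). symmetry; apply Csum_zero.
Qed.

Lemma low_rank_madd n r1 r2 A B :
  low_rank n r1 A -> low_rank n r2 B -> low_rank n (r1 + r2) (madd A B).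
Proof.
  intros [u1 [w1 H1]] [u2 [w2 H2]].
  exists (fun l => if Nat.ltb l r1 then u1 l else u2 (l - r1)%nat),
         (fun l => if Nat.ltb l r1 then w1 l else w2 (l - r1)%nat).
  intros i j Hi Hj. unfold madd. rewrite H1, H2, Csum_split by auto. f_equal.
  - apply Csum_ext; intros l Hl. destruct (Nat.ltb l r1) eqn:E; auto. apply Nat.ltb_ge in E; lia.
  - apply Csum_ext; intros l Hl. destruct (Nat.ltb (r1 + l) r1) eqn:E.
    apply Nat.ltb_lt in E; lia. replace (r1 + l - r1)%nat with l by lia. auto.
Qed.

Lemma low_rank_mmul_l n r A B : low_rank n r B -> low_rank n r (mmul n A B).
Proof.
  intros [u [w H]]. exists (fun l => mvmul n A (u l)), w. intros i j Hi Hj. unfold mmul, mvmul.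
  transitivity (Csum n (fun k => Csum r (fun l => Cmul (A i k) (Cmul (u l k) (Cconj (w l j)))))).
  - apply Csum_ext; intros. rewrite H, Csum_mul_l by auto. auto.
  - rewrite Csum_swap. apply Csum_ext; intros. rewrite <- Csum_mul_r. apply Csum_ext; intros; cx_ring.
Qed.

Lemma low_rank_mmul_r n r A B : low_rank n r A -> low_rank n r (mmul n A B).
Proof.
  intros [u [w H]]. exists u, (fun l => mvmul n (madj B) (w l)). intros i j Hi Hj.
  unfold mmul, mvmul, madj.
  transitivity (Csum n (fun k => Csum r (fun l => Cmul (Cmul (u l i) (Cconj (w l k))) (B k j)))).
  - apply Csum_ext; intros. rewrite H, Csum_mul_r by auto. auto.
  - rewrite Csum_swap. apply Csum_ext; intros.
    rewrite Csum_conj, <- Csum_mul_l. apply Csum_ext; intros; cx_ring.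
Qed.

Lemma low_rank_madj n r A : low_rank n r A -> low_rank n r (madj A).
Proof.
  intros [u [w H]]. exists w, u. intros i j Hi Hj. unfold madj.
  rewrite H, Csum_conj by auto. apply Csum_ext; intros; cx_ring.
Qed.

Lemma low_rank_mscale n r z A : low_rank n r A -> low_rank n r (mscale z A).
Proof.
  intros [u [w H]]. exists (fun l i => Cmul z (u l i)), w. intros i j Hi Hj. unfold mscale.
  rewrite H, <- Csum_mul_l by auto. apply Csum_ext; intros; cx_ring.
Qed.

Lemma low_rank_mono n r r' A : (r <= r')%nat -> low_rank n r A -> low_rank n r' A.
Proof.
  intros Hr HA. replace r' with (r + (r' - r))%nat by lia.
  eapply low_rank_madd with (B := mzero) in HA; [|apply (low_rank_mzero n (r' - r))].
  destruct HA as [u [w H]]. exists u, w. intros i j Hi Hj. rewrite <- H by auto.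
  unfold madd, mzero. cx_ring.
Qed.

Definition low_rank_plus_small (n r : nat) (e : R) (X : Mat) : Prop :=
  exists R E, meq n X (madd R E) /\ low_rank n r R /\ opnorm_le n E e.

Lemma lrps_ext n r e X Y : meq n X Y -> low_rank_plus_small n r e X -> low_rank_plus_small n r e Y.
Proof.
  intros HXY [R [E [H HRE]]]. exists R, E. split; auto. intros i j Hi Hj. rewrite <- HXY; auto.
Qed.

Lemma lrps_mono n r r' e e' X : (r <= r')%nat -> e <= e' ->
  low_rank_plus_small n r e X -> low_rank_plus_small n r' e' X.
Proof.
  intros Hr He [R [E [H [HR HE]]]]. exists R, E.
  split; [|split]; auto. apply (low_rank_mono n r); auto. apply (opnorm_mono n E e); auto.
Qed.

Lemma lrps_of_opnorm_le n e E : opnorm_le n E e -> low_rank_plus_small n 0 e E.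
Proof.
  intros HE. exists mzero, E. split; [|split]; auto using low_rank_mzero.
  intros i j _ _. unfold madd, mzero. cx_ring.
Qed.

Lemma lrps_madd n r1 r2 e1 e2 A B :
  low_rank_plus_small n r1 e1 A -> low_rank_plus_small n r2 e2 B ->
  low_rank_plus_small n (r1 + r2) (e1 + e2) (madd A B).
Proof.
  intros [R1 [E1 [H1 [HR1 HE1]]]] [R2 [E2 [H2 [HR2 HE2]]]].
  exists (madd R1 R2), (madd E1 E2). split; [|split].
  - intros i j Hi Hj. unfold madd. rewrite H1, H2 by auto. unfold madd. cx_ring.
  - apply low_rank_madd; auto.
  - apply opnorm_add; auto.
Qed.

Lemma lrps_mscale n r e z A :
  low_rank_plus_small n r e A -> low_rank_plus_small n r (Cmod z * e) (mscale z A).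
Proof.
  intros [R [E [H [HR HE]]]]. exists (mscale z R), (mscale z E). split; [|split].
  - intros i j Hi Hj. unfold mscale. rewrite H by auto. unfold madd. cx_ring.
  - apply low_rank_mscale; auto.
  - apply opnorm_scale; auto.
Qed.

Lemma lrps_mmul_l n r e a A B : 0 <= a -> opnorm_le n A a ->
  low_rank_plus_small n r e B -> low_rank_plus_small n r (a * e) (mmul n A B).
Proof.
  intros Ha HA [R [E [H [HR HE]]]]. exists (mmul n A R), (mmul n A E). split; [|split].
  - rewrite <- mmul_madd_r. apply meq_mmul; auto using meq_refl.
  - apply low_rank_mmul_l; auto.
  - apply opnorm_mmul; auto.
Qed.

Lemma lrps_mmul_r n r e b A B : 0 <= e -> opnorm_le n B b ->
  low_rank_plus_small n r e A -> low_rank_plus_small n r (e * b) (mmul n A B).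
Proof.
  intros He HB [R [E [H [HR HE]]]]. exists (mmul n R B), (mmul n E B). split; [|split].
  - rewrite <- mmul_madd_l. apply meq_mmul; auto using meq_refl.
  - apply low_rank_mmul_r; auto.
  - apply opnorm_mmul; auto.
Qed.

Lemma lrps_madj n r e A : 0 <= e ->
  low_rank_plus_small n r e A -> low_rank_plus_small n r e (madj A).
Proof.
  intros He [R [E [H [HR HE]]]]. exists (madj R), (madj E). split; [|split].
  - rewrite <- madj_madd. apply meq_madj; auto.
  - apply low_rank_madj; auto.
  - apply opnorm_madj; auto.
Qed.

(* Expanding [(RA + EA) (RB + EB)], only [EA EB] lacks a low-rank factor. *)
Lemma lrps_mmul n r s e f A B : 0 <= e ->
  low_rank_plus_small n r e A -> low_rank_plus_small n s f B ->
  low_rank_plus_small n (s + r) (e * f) (mmul n A B).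
Proof.
  intros He [RA [EA [HA [HRA HEA]]]] [RB [EB [HB [HRB HEB]]]].
  exists (madd (mmul n A RB) (mmul n RA EB)), (mmul n EA EB). split; [|split].
  - eapply meq_trans. apply meq_mmul. apply meq_refl. exact HB.
    rewrite mmul_madd_r. intros i j Hi Hj. unfold madd at 1 3.
    rewrite (meq_mmul n A (madd RA EA) EB EB HA (meq_refl n EB) i j Hi Hj), mmul_madd_l.
    unfold madd. cx_ring.
  - apply low_rank_madd. apply low_rank_mmul_l; auto. apply low_rank_mmul_r; auto.
  - apply opnorm_mmul; auto.
Qed.

Lemma preconditioned_normal_lrps n Si S SA r C eta : 0 <= C -> 0 <= eta ->
  opnorm_le n Si C -> meq n (mmul n Si S) mid ->
  low_rank_plus_small n r eta (msub SA S) ->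
  low_rank_plus_small n (4 * r) (C * eta + C * eta + C * eta * (C * eta))
    (msub (mmul n (madj (mmul n Si SA)) (mmul n Si SA)) mid).
Proof.
  intros HC He HSi HI HD.
  set (G := mmul n Si (msub SA S)).
  assert (HG : low_rank_plus_small n r (C * eta) G) by (apply lrps_mmul_l; auto).
  assert (HCe : 0 <= C * eta) by (apply Rmult_le_pos; auto).
  assert (HB : meq n (mmul n Si SA) (madd mid G)).
  { assert (ESA : SA = madd S (msub SA S))
      by (extensionality i; extensionality j; unfold madd, msub, mscale; cx_ring).
    unfold G. rewrite ESA at 1. rewrite mmul_madd_r. apply meq_madd; auto using meq_refl. }
  set (P := mmul n (madj (mmul n Si SA)) (mmul n Si SA)).
  assert (HP : meq n P (madd (madd (mmul n mid mid) (mmul n mid G))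
                             (madd (mmul n (madj G) mid) (mmul n (madj G) G)))).
  { eapply meq_trans. apply meq_mmul; [apply meq_madj|]; exact HB.
    rewrite madj_madd, madj_mid, mmul_madd_l, !mmul_madd_r. apply meq_refl. }
  eapply lrps_ext with (X := madd (madd G (madj G)) (mmul n (madj G) G)).
  - intros i j Hi Hj. change (msub P mid i j) with (Cadd (P i j) (Cmul (RtoC (-1)) (mid i j))).
    rewrite HP by auto. unfold madd.
    rewrite (mmul_mid_l n mid i j Hi Hj), (mmul_mid_l n G i j Hi Hj),
      (mmul_mid_r n (madj G) i j Hi Hj). cx_ring.
  - replace (4 * r)%nat with (r + r + (r + r))%nat by lia.
    apply lrps_madd. apply lrps_madd; auto. apply lrps_madj; auto.
    apply lrps_mmul; auto. apply lrps_madj; auto.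
Qed.

(** * The matrix sine *)

Lemma msub_mmul_split n X Y P Q :
  msub (mmul n X P) (mmul n Y Q) = madd (mmul n X (msub P Q)) (mmul n (msub X Y) Q).
Proof.
  unfold msub. rewrite mmul_madd_r, mmul_madd_l, mmul_mscale_r, mmul_mscale_l.
  extensionality i; extensionality j. unfold madd, mscale. cx_ring.
Qed.

Lemma opnorm_msub_self n X : opnorm_le n (msub X X) 0.
Proof.
  eapply opnorm_ext; [|apply opnorm_mzero].
  intros i j _ _. unfold msub, madd, mscale, mzero. cx_ring.
Qed.

(* [X^(k+1) - Y^(k+1) = X (X^k - Y^k) + (X - Y) Y^k]. *)
Lemma mpow_sub_lrps n K X Y r e : 0 <= K -> 0 <= e ->
  opnorm_le n X K -> opnorm_le n Y K -> low_rank_plus_small n r e (msub X Y) ->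
  forall k, low_rank_plus_small n (k * r) (INR k * (K + 1) ^ k * e)
              (msub (mpow n X k) (mpow n Y k)).
Proof.
  intros HK He HX HY HD k. induction k.
  - simpl. rewrite !Rmult_0_l. apply lrps_of_opnorm_le, opnorm_msub_self.
  - simpl mpow. rewrite msub_mmul_split.
    assert (HKk : 0 <= INR k * (K + 1) ^ k * e)
      by (apply Rmult_le_pos; auto; apply Rmult_le_pos; [apply pos_INR | apply pow_le; lra]).
    apply lrps_mono with (k * r + r)%nat (K * (INR k * (K + 1) ^ k * e) + e * K ^ k).
    + lia.
    + assert (K ^ k <= (K + 1) ^ k) by (apply pow_incr; lra).
      assert (0 <= (K + 1) ^ k) by (apply pow_le; lra).
      assert (K * (INR k * (K + 1) ^ k * e) <= (K + 1) * (INR k * (K + 1) ^ k * e))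
        by (apply Rmult_le_compat_r; lra).
      assert (e * K ^ k <= e * ((K + 1) * (K + 1) ^ k)) by (apply Rmult_le_compat_l; nra).
      replace (INR (S k) * (K + 1) ^ S k * e)
        with ((K + 1) * (INR k * (K + 1) ^ k * e) + e * ((K + 1) * (K + 1) ^ k))
        by (rewrite S_INR; simpl; ring).
      lra.
    + apply lrps_madd. apply lrps_mmul_l; auto. apply lrps_mmul_r; auto. apply opnorm_mpow; auto.
Qed.

Lemma lrps_Csum n r p (c : nat -> R) (D : nat -> Mat) (e : nat -> R) :
  (forall m, (m < p)%nat -> low_rank_plus_small n r (e m) (D m)) ->
  low_rank_plus_small n (p * r) (Rsum p (fun m => Rabs (c m) * e m))
    (fun i j => Csum p (fun m => Cscale (c m) (D m i j))).
Proof.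
  induction p; intros H.
  - simpl. apply lrps_of_opnorm_le. eapply opnorm_ext; [|apply opnorm_mzero].
    intros i j _ _. reflexivity.
  - replace (S p * r)%nat with (p * r + r)%nat by lia. cbn [Rsum].
    rewrite <- Cmod_RtoC.
    eapply lrps_ext; [|apply lrps_madd; [apply IHp | apply lrps_mscale]];
      [|intros; apply H; lia| apply H; lia].
    intros i j _ _. unfold madd, mscale. simpl. cx_ring.
Qed.

Definition sin_coeff (m : nat) : R := (-1) ^ m / INR (fact (2 * m + 1)).

Lemma sin_partial_sub n X Y L :
  msub (sin_partial n X L) (sin_partial n Y L) =
  fun i j => Csum (S L) (fun m => Cscale (sin_coeff m)
                                   (msub (mpow n X (2 * m + 1)) (mpow n Y (2 * m + 1)) i j)).
Proof.
  extensionality i; extensionality j. unfold msub at 1, madd at 1, mscale at 1, sin_partial.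
  rewrite <- Csum_mul_l, <- Csum_add. apply Csum_ext; intros.
  unfold msub, madd, mscale, sin_coeff. cx_ring.
Qed.

Lemma sin_partial_sub_lrps n K X Y r e L : 0 <= K -> 0 <= e ->
  opnorm_le n X K -> opnorm_le n Y K -> low_rank_plus_small n r e (msub X Y) ->
  low_rank_plus_small n (S L * (2 * L + 1) * r)
    (Rsum (S L) (fun m => Rabs (sin_coeff m) * (INR (2 * m + 1) * (K + 1) ^ (2 * m + 1))) * e)
    (msub (sin_partial n X L) (sin_partial n Y L)).
Proof.
  intros HK He HX HY HD. rewrite sin_partial_sub.
  replace (S L * (2 * L + 1) * r)%nat with (S L * ((2 * L + 1) * r))%nat by lia.
  replace (Rsum (S L) _ * e) with (Rsum (S L) (fun m =>
            Rabs (sin_coeff m) * (INR (2 * m + 1) * (K + 1) ^ (2 * m + 1) * e)))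
    by (rewrite Rmult_comm, <- Rsum_scal; apply Rsum_ext; intros; ring).
  apply lrps_Csum.
  intros m Hm. apply lrps_mono with ((2 * m + 1) * r)%nat (INR (2 * m + 1) * (K + 1) ^ (2 * m + 1) * e).
  - apply Nat.mul_le_mono_r. lia.
  - lra.
  - apply mpow_sub_lrps; auto.
Qed.

Definition exp_term (K : R) (j : nat) : R := K ^ j / INR (fact j).

Lemma exp_term_nonneg K j : 0 <= K -> 0 <= exp_term K j.
Proof. intros. apply Rle_mult_inv_pos. apply pow_le; auto. apply lt_0_INR, lt_O_fact. Qed.

Lemma exp_term_succ_le_half K j :
  0 <= K -> 2 * K <= INR (S j) -> exp_term K (S j) <= exp_term K j / 2.
Proof.
  intros HK H. unfold exp_term. simpl pow. rewrite fact_simpl, mult_INR.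
  assert (0 < INR (fact j)) by apply lt_0_INR, lt_O_fact.
  assert (0 < INR (S j)) by (apply lt_0_INR; lia). assert (0 <= K ^ j) by (apply pow_le; auto).
  replace (K * K ^ j / (INR (S j) * INR (fact j)))
    with (K / INR (S j) * (K ^ j / INR (fact j))) by (field; lra).
  replace (K ^ j / INR (fact j) / 2) with (/ 2 * (K ^ j / INR (fact j))) by (field; lra).
  apply Rmult_le_compat_r. apply Rle_mult_inv_pos; auto.
  apply Rmult_le_reg_r with (INR (S j)); auto. unfold Rdiv. rewrite Rmult_assoc, Rinv_l; lra.
Qed.

Lemma exp_term_tail_sum K J : 0 <= K -> 2 * K <= INR (S J) -> forall p,
  Rsum p (fun q => exp_term K (J + 2 * q)) + 2 * exp_term K (J + 2 * p) <= 2 * exp_term K J.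
Proof.
  intros HK HJ p. induction p. simpl. rewrite Nat.add_0_r. lra.
  cbn [Rsum]. replace (J + 2 * S p)%nat with (S (S (J + 2 * p))) by lia.
  assert (Hi : forall j, (J <= j)%nat -> 2 * K <= INR (S j))
    by (intros j Hj; eapply Rle_trans; [apply HJ | apply le_INR; lia]).
  assert (h1 := exp_term_succ_le_half K (S (J + 2 * p)) HK (Hi (S (J + 2 * p)) ltac:(lia))).
  assert (h2 := exp_term_succ_le_half K (J + 2 * p) HK (Hi (J + 2 * p)%nat ltac:(lia))).
  assert (h3 := exp_term_nonneg K (J + 2 * p) HK). lra.
Qed.

Lemma exp_term_small K eps : 0 <= K -> 0 < eps ->
  exists L, 2 * K <= INR (S (2 * L + 3)) /\ 2 * exp_term K (2 * L + 3) <= eps.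
Proof.
  intros HK Heps. destruct (cv_speed_pow_fact K (eps / 2) ltac:(lra)) as [N1 HN1].
  set (L := (N1 + Z.to_nat (up K))%nat). exists L. split.
  - assert (K <= INR (Z.to_nat (up K))) by (apply le_INR_of_up_le; lia).
    assert (2 * INR (Z.to_nat (up K)) <= INR (S (2 * L + 3))).
    { replace (2 * INR (Z.to_nat (up K))) with (INR (2 * Z.to_nat (up K)))
        by (rewrite mult_INR; simpl; ring).
      apply le_INR. unfold L. lia. }
    lra.
  - assert (h := HN1 (2 * L + 3)%nat ltac:(unfold L; lia)).
    unfold R_dist in h. rewrite Rminus_0_r in h. apply Rabs_def2 in h. unfold exp_term. lra.
Qed.

Lemma sin_partial_sub_opnorm n X K L : 0 <= K -> opnorm_le n X K -> forall p,
  opnorm_le n (msub (sin_partial n X (L + p)) (sin_partial n X L))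
    (Rsum p (fun q => exp_term K (2 * L + 3 + 2 * q))).
Proof.
  intros HK HX p. induction p.
  - rewrite Nat.add_0_r. apply opnorm_msub_self.
  - replace (L + S p)%nat with (S (L + p)) by lia.
    set (m := S (L + p)).
    assert (E : msub (sin_partial n X m) (sin_partial n X L) =
       madd (msub (sin_partial n X (L + p)) (sin_partial n X L))
            (mscale (RtoC (sin_coeff m)) (mpow n X (2 * m + 1)))).
    { extensionality i; extensionality j. unfold msub, madd, mscale, sin_partial, sin_coeff.
      simpl Csum. cx_ring. }
    rewrite E. cbn [Rsum]. apply opnorm_add. exact IHp.
    replace (exp_term K (2 * L + 3 + 2 * p)) with (Cmod (RtoC (sin_coeff m)) * K ^ (2 * m + 1)).
    + apply opnorm_scale. apply opnorm_mpow; auto.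
    + rewrite Cmod_RtoC. unfold exp_term, sin_coeff.
      replace (2 * L + 3 + 2 * p)%nat with (2 * m + 1)%nat by lia.
      unfold Rdiv. rewrite Rabs_mult, pow_1_abs, Rabs_inv, Rabs_right. ring. apply Rle_ge, pos_INR.
Qed.

Lemma Un_cv_const (c : R) : Un_cv (fun _ => c) c.
Proof. intros e He. exists O. intros. unfold R_dist. rewrite Rminus_diag, Rabs_R0. auto. Qed.

Lemma Un_cv_ext (u u' : nat -> R) l : (forall N, u N = u' N) -> Un_cv u l -> Un_cv u' l.
Proof. intros E H e He. destruct (H e He) as [N HN]. exists N. intros m Hm. rewrite <- E. auto. Qed.

Lemma Un_cv_le_eventually (u : nat -> R) l c N0 :
  Un_cv u l -> (forall N, (N0 <= N)%nat -> u N <= c) -> l <= c.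
Proof.
  intros Hu H. destruct (Rle_or_lt l c); auto. destruct (Hu (l - c)) as [N1 HN1]. lra.
  specialize (HN1 (Nat.max N0 N1) ltac:(lia)). specialize (H (Nat.max N0 N1) ltac:(lia)).
  unfold R_dist in HN1. apply Rabs_def2 in HN1. lra.
Qed.

Lemma Rsum_cv n (F : nat -> nat -> R) (G : nat -> R) :
  (forall i, (i < n)%nat -> Un_cv (fun N => F N i) (G i)) ->
  Un_cv (fun N => Rsum n (F N)) (Rsum n G).
Proof.
  induction n; intros H; simpl. apply Un_cv_const.
  apply CV_plus. apply IHn; intros; apply H; lia. apply H; lia.
Qed.

Definition entrywise_cv (n : nat) (Z : nat -> Mat) (T : Mat) : Prop :=
  forall i j, (i < n)%nat -> (j < n)%nat ->
    Un_cv (fun N => fst (Z N i j)) (fst (T i j)) /\ Un_cv (fun N => snd (Z N i j)) (snd (T i j)).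

Lemma mvmul_entrywise_cv n Z T v i : (i < n)%nat -> entrywise_cv n Z T ->
  Un_cv (fun N => fst (mvmul n (Z N) v i)) (fst (mvmul n T v i)) /\
  Un_cv (fun N => snd (mvmul n (Z N) v i)) (snd (mvmul n T v i)).
Proof.
  intros Hi HZ. unfold mvmul. split.
  - apply Un_cv_ext with (fun N => Rsum n (fun l => fst (Cmul (Z N i l) (v l)))).
    intros; rewrite fst_Csum; auto.
    rewrite fst_Csum. apply Rsum_cv. intros l Hl. destruct (HZ i l Hi Hl).
    unfold Cmul; simpl. apply CV_minus; apply CV_mult; auto; apply Un_cv_const.
  - apply Un_cv_ext with (fun N => Rsum n (fun l => snd (Cmul (Z N i l) (v l)))).
    intros; rewrite snd_Csum; auto.
    rewrite snd_Csum. apply Rsum_cv. intros l Hl. destruct (HZ i l Hi Hl).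
    unfold Cmul; simpl. apply CV_plus; apply CV_mult; auto; apply Un_cv_const.
Qed.

Lemma opnorm_le_of_entrywise_cv n (Z : nat -> Mat) T c N0 : 0 <= c -> entrywise_cv n Z T ->
  (forall N, (N0 <= N)%nat -> opnorm_le n (Z N) c) -> opnorm_le n T c.
Proof.
  intros Hc HZ HN v.
  assert (Hcv : Un_cv (fun N => vnorm2 n (mvmul n (Z N) v)) (vnorm2 n (mvmul n T v))).
  { apply Rsum_cv. intros i Hi. destruct (mvmul_entrywise_cv n Z T v i Hi HZ).
    unfold Cnorm2. apply CV_plus; apply CV_mult; auto. }
  assert (Hb : vnorm2 n (mvmul n T v) <= (c * vnorm n v) * (c * vnorm n v)).
  { eapply Un_cv_le_eventually. apply Hcv. intros N HN0. cbv beta. rewrite <- vnorm_sq.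
    specialize (HN N HN0 v). assert (0 <= vnorm n (mvmul n (Z N) v)) by apply vnorm_nonneg. nra. }
  unfold vnorm at 1. rewrite <- (sqrt_square (c * vnorm n v)).
  - apply sqrt_le_1_alt. auto.
  - apply Rmult_le_pos; auto; apply vnorm_nonneg.
Qed.

Lemma fst_msub A B i j : fst (msub A B i j) = fst (A i j) - fst (B i j).
Proof. unfold msub, madd, mscale, RtoC, Cmul, Cadd; simpl; ring. Qed.

Lemma snd_msub A B i j : snd (msub A B i j) = snd (A i j) - snd (B i j).
Proof. unfold msub, madd, mscale, RtoC, Cmul, Cadd; simpl; ring. Qed.

Lemma msin_sub_partial_opnorm n X SX K L : 0 <= K -> 2 * K <= INR (S (2 * L + 3)) ->
  opnorm_le n X K -> is_msin n X SX ->
  opnorm_le n (msub SX (sin_partial n X L)) (2 * exp_term K (2 * L + 3)).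
Proof.
  intros HK HL HX HS.
  apply opnorm_le_of_entrywise_cv
    with (Z := fun N => msub (sin_partial n X N) (sin_partial n X L)) (N0 := L).
  - assert (0 <= exp_term K (2 * L + 3)) by (apply exp_term_nonneg; auto). lra.
  - intros i j Hi Hj. destruct (HS i j Hi Hj) as [C1 C2]. rewrite fst_msub, snd_msub. split.
    + eapply Un_cv_ext; [|apply (CV_minus _ _ _ _ C1 (Un_cv_const (fst (sin_partial n X L i j))))].
      intros; rewrite fst_msub; auto.
    + eapply Un_cv_ext; [|apply (CV_minus _ _ _ _ C2 (Un_cv_const (snd (sin_partial n X L i j))))].
      intros; rewrite snd_msub; auto.
  - intros N HN. replace N with (L + (N - L))%nat by lia.
    eapply opnorm_mono; [|apply (sin_partial_sub_opnorm n X K L HK HX)].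
    pose proof (exp_term_tail_sum K (2 * L + 3) HK HL (N - L)).
    assert (0 <= exp_term K (2 * L + 3 + 2 * (N - L))) by (apply exp_term_nonneg; auto). lra.
Qed.

Lemma msin_sub_lrps K eta : 0 <= K -> 0 < eta -> exists q e0, 0 < e0 /\
  forall n r X Y SX SY, opnorm_le n X K -> opnorm_le n Y K ->
    is_msin n X SX -> is_msin n Y SY ->
    low_rank_plus_small n r e0 (msub X Y) -> low_rank_plus_small n (q * r) eta (msub SX SY).
Proof.
  intros HK Heta. destruct (exp_term_small K (eta / 3) HK ltac:(lra)) as [L [HL Htail]].
  set (B := Rsum (S L) (fun m =>
              Rabs (sin_coeff m) * (INR (2 * m + 1) * (K + 1) ^ (2 * m + 1)))).
  assert (HB : 0 <= B).
  { apply Rsum_nonneg. intros. apply Rmult_le_pos. apply Rabs_pos.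
    apply Rmult_le_pos. apply pos_INR. apply pow_le; lra. }
  set (e0 := eta / (3 * (B + 1))).
  assert (He0 : 0 < e0) by (apply Rdiv_lt_0_compat; lra).
  assert (HBe0 : B * e0 <= eta / 3)
    by (unfold e0; apply Rmult_le_reg_r with (3 * (B + 1)); [lra | field_simplify; lra]).
  exists (S L * (2 * L + 1))%nat, e0. split; auto.
  intros n r X Y SX SY HX HY HSX HSY HD.
  eapply lrps_ext with (X := madd (msub (sin_partial n X L) (sin_partial n Y L))
                                  (msub (msub SX (sin_partial n X L)) (msub SY (sin_partial n Y L)))).
  { intros i j _ _. unfold msub, madd, mscale. cx_ring. }
  apply lrps_mono with (S L * (2 * L + 1) * r + 0)%nat
                       (B * e0 + (2 * exp_term K (2 * L + 3) + 2 * exp_term K (2 * L + 3))).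
  - lia.
  - lra.
  - apply lrps_madd. apply sin_partial_sub_lrps; auto; lra.
    apply lrps_of_opnorm_le, opnorm_msub; apply msin_sub_partial_opnorm; auto.
Qed.

Definition is_RInt_pi (f : R -> R) (v : R) : Prop := is_RInt f (- PI) PI v.

Lemma is_RInt_pi_plus f g x y :
  is_RInt_pi f x -> is_RInt_pi g y -> is_RInt_pi (fun t => f t + g t) (x + y).
Proof. intros H1 H2. exact (is_RInt_plus f g _ _ _ _ H1 H2). Qed.

Lemma is_RInt_pi_scal c f x : is_RInt_pi f x -> is_RInt_pi (fun t => c * f t) (c * x).
Proof. intros H1. exact (is_RInt_scal f _ _ c _ H1). Qed.

Lemma is_RInt_pi_opp f x : is_RInt_pi f x -> is_RInt_pi (fun t => - f t) (- x).
Proof. intros H1. exact (is_RInt_opp f _ _ _ H1). Qed.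

Lemma is_RInt_pi_minus f g x y :
  is_RInt_pi f x -> is_RInt_pi g y -> is_RInt_pi (fun t => f t - g t) (x - y).
Proof. intros H1 H2. exact (is_RInt_minus f g _ _ _ _ H1 H2). Qed.

Lemma is_RInt_pi_const c : is_RInt_pi (fun _ => c) (2 * PI * c).
Proof.
  pose proof (@is_RInt_const R_NormedModule (- PI) PI c) as H.
  replace (2 * PI * c) with (scal (PI - - PI) c : R); auto.
  change (scal (PI - - PI) c) with ((PI - - PI) * c). ring.
Qed.

Lemma is_RInt_pi_ext f g v :
  (forall t, - PI < t < PI -> f t = g t) -> is_RInt_pi f v -> is_RInt_pi g v.
Proof.
  intros E H. assert (HP := PI_RGT_0). apply is_RInt_ext with f; auto.
  intros x Hx. rewrite Rmin_left, Rmax_right in Hx by lra. apply E; auto.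
Qed.

Lemma is_RInt_pi_eq f v v' : is_RInt_pi f v -> v = v' -> is_RInt_pi f v'.
Proof. intros H E; subst; auto. Qed.

Lemma is_RInt_pi_le f g x y : is_RInt_pi f x -> is_RInt_pi g y ->
  (forall t, - PI < t < PI -> f t <= g t) -> x <= y.
Proof. intros H1 H2 H. apply (is_RInt_le f g (- PI) PI x y); auto. assert (h := PI_RGT_0); lra. Qed.

Lemma is_RInt_pi_Rsum n (F : nat -> R -> R) (v : nat -> R) :
  (forall l, (l < n)%nat -> is_RInt_pi (F l) (v l)) ->
  is_RInt_pi (fun t => Rsum n (fun l => F l t)) (Rsum n v).
Proof.
  induction n; intros H; simpl.
  - eapply is_RInt_pi_eq. apply is_RInt_pi_const. ring.
  - apply is_RInt_pi_plus. apply IHn; intros; apply H; lia. apply H; lia.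
Qed.

Lemma is_RInt_pi_derive (F f : R -> R) : (forall x, is_derive F x (f x)) ->
  (forall x, continuous f x) -> is_RInt_pi f (F PI - F (- PI)).
Proof.
  intros H1 H2.
  exact (@is_RInt_derive R_CompleteNormedModule F f (- PI) PI (fun x _ => H1 x) (fun x _ => H2 x)).
Qed.

Lemma is_RInt_pi_cos (k : Z) :
  is_RInt_pi (fun t => cos (IZR k * t)) (if Z.eqb k 0 then 2 * PI else 0).
Proof.
  destruct (Z.eqb k 0) eqn:E.
  - apply Z.eqb_eq in E; subst.
    eapply is_RInt_pi_ext; [|apply (is_RInt_pi_eq _ _ _ (is_RInt_pi_const 1))].
    intros; simpl. rewrite Rmult_0_l, cos_0; auto. ring.
  - apply Z.eqb_neq in E. assert (Hk : IZR k <> 0) by (apply not_0_IZR; auto).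
    eapply is_RInt_pi_eq. apply (is_RInt_pi_derive (fun t => sin (IZR k * t) / IZR k)).
    + intros x. auto_derive. auto. field; auto.
    + intros x. apply (@ex_derive_continuous R_AbsRing R_NormedModule). auto_derive. auto.
    + replace (IZR k * - PI) with (- (IZR k * PI)) by ring.
      rewrite sin_neg, (sin_eq_0_1 (IZR k * PI)) by (exists k; auto). field; auto.
Qed.

Lemma is_RInt_pi_sin (k : Z) : is_RInt_pi (fun t => sin (IZR k * t)) 0.
Proof.
  destruct (Z.eq_dec k 0) as [E|E].
  - subst. eapply is_RInt_pi_ext; [|apply (is_RInt_pi_eq _ _ _ (is_RInt_pi_const 0))].
    intros; simpl. rewrite Rmult_0_l, sin_0; auto. ring.
  - assert (Hk : IZR k <> 0) by (apply not_0_IZR; auto).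
    eapply is_RInt_pi_eq. apply (is_RInt_pi_derive (fun t => - cos (IZR k * t) / IZR k)).
    + intros x. auto_derive. auto. field; auto.
    + intros x. apply (@ex_derive_continuous R_AbsRing R_NormedModule). auto_derive. auto.
    + replace (IZR k * - PI) with (- (IZR k * PI)) by ring. rewrite cos_neg. field; auto.
Qed.

Definition cis (x : R) : Cx := (cos x, sin x).
Definition delta0 (k : Z) : Cx := if Z.eqb k 0 then C1 else C0.

(* As [is_fourier_coeff], but with Coquelicot's integral instead of Riemann integrals. *)
Definition has_fourier_coeffs (h : R -> Cx) (c : Z -> Cx) : Prop := forall k,
  is_RInt_pi (fun t => fst (Cmul (h t) (cexp_neg k t))) (2 * PI * fst (c k)) /\
  is_RInt_pi (fun t => snd (Cmul (h t) (cexp_neg k t))) (2 * PI * snd (c k)).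

Lemma has_fourier_coeffs_of_is_fourier_coeff f a :
  (forall k, is_fourier_coeff f k (a k)) -> has_fourier_coeffs f a.
Proof.
  intros H k. destruct (H k) as [[pr1 E1] [pr2 E2]]. unfold is_RInt_pi, Cre, Cim in *. split.
  - rewrite <- E1, <- RInt_Reals. apply (@RInt_correct R_CompleteNormedModule).
    apply ex_RInt_Reals_1; auto.
  - rewrite <- E2, <- RInt_Reals. apply (@RInt_correct R_CompleteNormedModule).
    apply ex_RInt_Reals_1; auto.
Qed.

Lemma has_fourier_coeffs_one : has_fourier_coeffs (fun _ => C1) delta0.
Proof.
  intros k. split.
  - eapply is_RInt_pi_ext; [|apply (is_RInt_pi_eq _ _ _ (is_RInt_pi_cos k))].
    + intros t _. unfold Cmul, C1, cexp_neg; simpl. ring.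
    + unfold delta0. destruct (Z.eqb k 0); unfold C1, C0; simpl; ring.
  - eapply is_RInt_pi_ext; [|apply (is_RInt_pi_eq _ _ _ (is_RInt_pi_opp _ _ (is_RInt_pi_sin k)))].
    + intros t _. unfold Cmul, C1, cexp_neg; simpl. ring.
    + unfold delta0. destruct (Z.eqb k 0); unfold C1, C0; simpl; ring.
Qed.

Lemma has_fourier_coeffs_ext h c c' :
  has_fourier_coeffs h c -> (forall k, c k = c' k) -> has_fourier_coeffs h c'.
Proof. intros H E k. rewrite <- E. apply H. Qed.

Lemma has_fourier_coeffs_zero : has_fourier_coeffs (fun _ => C0) (fun _ => C0).
Proof.
  intros k. split; (eapply is_RInt_pi_ext; [|apply (is_RInt_pi_eq _ _ _ (is_RInt_pi_const 0))]);
    try (intros; unfold Cmul, C0; simpl; ring); unfold C0; simpl; ring.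
Qed.

Lemma has_fourier_coeffs_scale h c z : has_fourier_coeffs h c ->
  has_fourier_coeffs (fun t => Cmul z (h t)) (fun k => Cmul z (c k)).
Proof.
  intros H k. destruct (H k) as [H1 H2]. split.
  - eapply is_RInt_pi_ext; [|apply (is_RInt_pi_eq _ _ _ (is_RInt_pi_minus _ _ _ _
      (is_RInt_pi_scal (fst z) _ _ H1) (is_RInt_pi_scal (snd z) _ _ H2)))].
    intros; unfold Cmul; simpl; ring. unfold Cmul; simpl; ring.
  - eapply is_RInt_pi_ext; [|apply (is_RInt_pi_eq _ _ _ (is_RInt_pi_plus _ _ _ _
      (is_RInt_pi_scal (fst z) _ _ H2) (is_RInt_pi_scal (snd z) _ _ H1)))].
    intros; unfold Cmul; simpl; ring. unfold Cmul; simpl; ring.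
Qed.

Lemma has_fourier_coeffs_add h1 h2 c1 c2 :
  has_fourier_coeffs h1 c1 -> has_fourier_coeffs h2 c2 ->
  has_fourier_coeffs (fun t => Cadd (h1 t) (h2 t)) (fun k => Cadd (c1 k) (c2 k)).
Proof.
  intros H1 H2 k. destruct (H1 k) as [A1 B1]; destruct (H2 k) as [A2 B2]. split.
  - eapply is_RInt_pi_ext; [|apply (is_RInt_pi_eq _ _ _ (is_RInt_pi_plus _ _ _ _ A1 A2))].
    intros; unfold Cmul, Cadd; simpl; ring. unfold Cadd; simpl; ring.
  - eapply is_RInt_pi_ext; [|apply (is_RInt_pi_eq _ _ _ (is_RInt_pi_plus _ _ _ _ B1 B2))].
    intros; unfold Cmul, Cadd; simpl; ring. unfold Cadd; simpl; ring.
Qed.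

Lemma has_fourier_coeffs_Csum N (g : nat -> R -> Cx) (d : nat -> Z -> Cx) :
  (forall l, (l < N)%nat -> has_fourier_coeffs (g l) (d l)) ->
  has_fourier_coeffs (fun t => Csum N (fun l => g l t)) (fun k => Csum N (fun l => d l k)).
Proof.
  induction N; intros H; simpl.
  - apply has_fourier_coeffs_zero.
  - apply has_fourier_coeffs_add. apply IHN; intros; apply H; lia. apply H; lia.
Qed.

Lemma Cmul_cis_cexp_neg (j k : Z) t : Cmul (cis (IZR j * t)) (cexp_neg k t) = cexp_neg (k - j) t.
Proof.
  unfold cis, cexp_neg, Cmul; simpl. rewrite minus_IZR.
  replace ((IZR k - IZR j) * t) with (IZR k * t - IZR j * t) by ring.
  rewrite cos_minus, sin_minus. apply injective_projections; simpl; ring.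
Qed.

Lemma has_fourier_coeffs_cis (j : Z) :
  has_fourier_coeffs (fun t => cis (IZR j * t)) (fun k => delta0 (k - j)).
Proof.
  intros k. destruct (has_fourier_coeffs_one (k - j)%Z) as [H1 H2].
  split; (eapply is_RInt_pi_ext; [|eassumption]); intros; cbv beta;
    rewrite <- Cmul_cis_cexp_neg; unfold Cmul, C1; simpl; ring.
Qed.

(** * Toeplitz matrices are bounded by the symbol *)

Definition trig_vec (n : nat) (w : Vec) (t : R) : Cx :=
  Csum n (fun j => Cmul (w j) (cis (INR j * t))).

Lemma cexp_neg_of_nat_sub (j k : nat) t :
  cexp_neg (Z.of_nat j - Z.of_nat k) t = Cmul (Cconj (cis (INR j * t))) (cis (INR k * t)).
Proof.
  unfold cis, cexp_neg, Cmul, Cconj; simpl. rewrite minus_IZR, <- !INR_IZR_INZ.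
  replace ((INR j - INR k) * t) with (INR j * t - INR k * t) by ring.
  rewrite cos_minus, sin_minus. apply injective_projections; simpl; ring.
Qed.

Lemma Csum_Csum_cexp_neg n w v z t :
  Csum n (fun j => Csum n (fun k =>
    Cmul (Cmul (Cconj (w j)) (v k)) (Cmul z (cexp_neg (Z.of_nat j - Z.of_nat k) t))))
  = Cmul (Cmul z (Cconj (trig_vec n w t))) (trig_vec n v t).
Proof.
  unfold trig_vec. rewrite <- Csum_mul_l, Csum_conj, <- Csum_mul_l.
  transitivity (Csum n (fun k => Csum n (fun j =>
    Cmul (Cmul z (Cconj (Cmul (w j) (cis (INR j * t))))) (Cmul (v k) (cis (INR k * t)))))).
  - rewrite Csum_swap. apply Csum_ext; intros j _. apply Csum_ext; intros k _.
    rewrite cexp_neg_of_nat_sub. cx_ring.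
  - apply Csum_ext; intros k _. rewrite <- Csum_mul_r. auto.
Qed.

Lemma Rsum_Rsum_toeplitz n w v c :
  Rsum n (fun j => Rsum n (fun k =>
    fst (Cmul (Cmul (Cconj (w j)) (v k)) (Cscale (2 * PI) (c (Z.of_nat j - Z.of_nat k)%Z)))))
  = 2 * PI * fst (cdot n w (mvmul n (toeplitz c) v)).
Proof.
  unfold cdot, mvmul, toeplitz. rewrite fst_Csum, <- Rsum_scal. apply Rsum_ext; intros j _.
  rewrite <- Csum_mul_l, fst_Csum, <- Rsum_scal. apply Rsum_ext; intros k _.
  unfold Cmul, Cscale, Cconj; simpl. ring.
Qed.

(* The quadratic form of [T_n(c)] is the integral of the symbol against
   [conj (W_w) W_v], where [W_u (t) = sum_j u_j e^(ijt)]. *)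
Lemma toeplitz_form_integral h c n w v : has_fourier_coeffs h c ->
  is_RInt_pi (fun t => fst (Cmul (Cmul (h t) (Cconj (trig_vec n w t))) (trig_vec n v t)))
    (2 * PI * fst (cdot n w (mvmul n (toeplitz c) v))).
Proof.
  intros H. rewrite <- Rsum_Rsum_toeplitz.
  set (F := fun j k t =>
     fst (Cmul (Cconj (w j)) (v k)) * fst (Cmul (h t) (cexp_neg (Z.of_nat j - Z.of_nat k) t)) -
     snd (Cmul (Cconj (w j)) (v k)) * snd (Cmul (h t) (cexp_neg (Z.of_nat j - Z.of_nat k) t))).
  apply is_RInt_pi_ext with (f := fun t => Rsum n (fun j => Rsum n (fun k => F j k t))).
  - intros t _. rewrite <- Csum_Csum_cexp_neg, fst_Csum. apply Rsum_ext; intros j _.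
    rewrite fst_Csum. apply Rsum_ext; intros k _. reflexivity.
  - apply (is_RInt_pi_Rsum n (fun j t => Rsum n (fun k => F j k t))). intros j _.
    apply (is_RInt_pi_Rsum n (fun k t => F j k t)). intros k _.
    destruct (H (Z.of_nat j - Z.of_nat k)%Z) as [H1 H2].
    eapply is_RInt_pi_eq.
    + apply (is_RInt_pi_minus _ _ _ _ (is_RInt_pi_scal _ _ _ H1) (is_RInt_pi_scal _ _ _ H2)).
    + unfold Cmul at 3, Cscale; simpl. ring.
Qed.

Lemma toeplitz_delta0 n : meq n (toeplitz delta0) mid.
Proof.
  intros i j Hi Hj. unfold toeplitz, delta0, mid. destruct (Nat.eqb i j) eqn:E.
  - apply Nat.eqb_eq in E; subst. rewrite Z.sub_diag. reflexivity.
  - apply Nat.eqb_neq in E. destruct (Z.eqb (Z.of_nat i - Z.of_nat j) 0) eqn:E2; auto.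
    apply Z.eqb_eq in E2. lia.
Qed.

Lemma parseval_trig_vec n w : is_RInt_pi (fun t => Cnorm2 (trig_vec n w t)) (2 * PI * vnorm2 n w).
Proof.
  eapply is_RInt_pi_ext; [|apply (is_RInt_pi_eq _ _ _
                                  (toeplitz_form_integral _ _ n w w has_fourier_coeffs_one))].
  - intros t _. unfold Cmul, Cconj, C1, Cnorm2; simpl. ring.
  - rewrite <- fst_cdot_self. do 2 f_equal. unfold cdot. apply Csum_ext; intros i Hi. f_equal.
    rewrite <- (mvmul_mid n w i Hi). unfold mvmul. apply Csum_ext; intros l Hl.
    rewrite (toeplitz_delta0 n i l Hi Hl). auto.
Qed.

Lemma opnorm_toeplitz_le h c K n : has_fourier_coeffs h c -> 0 <= K ->
  (forall t, - PI < t < PI -> Cmod (h t) <= K) -> opnorm_le n (toeplitz c) K.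
Proof.
  intros H HK Hb. apply opnorm_le_of_form_bound; auto. intros v w lam Hl.
  assert (HP := PI_RGT_0).
  assert (Hbound := is_RInt_pi_plus _ _ _ _ (is_RInt_pi_scal (K / 2 * lam) _ _ (parseval_trig_vec n w))
                                     (is_RInt_pi_scal (K / 2 / lam) _ _ (parseval_trig_vec n v))).
  apply Rmult_le_reg_l with (2 * PI). lra.
  eapply Rle_trans. apply (is_RInt_pi_le _ _ _ _ (toeplitz_form_integral h c n w v H) Hbound).
  - intros t Ht. eapply Rle_trans. apply fst_le_Cmod. rewrite !Cmod_mul, Cmod_conj, <- !Cmod_sq.
    set (a := Cmod (trig_vec n w t)). set (b := Cmod (trig_vec n v t)).
    assert (0 <= a * b) by (apply Rmult_le_pos; apply Cmod_nonneg).
    assert (Cmod (h t) * a * b <= K * (a * b))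
      by (rewrite Rmult_assoc; apply Rmult_le_compat_r; auto).
    assert (h4 := mul_le_amgm a b lam Hl).
    replace (K / 2 * lam * (a * a) + K / 2 / lam * (b * b))
      with (K * ((lam * (a * a) + b * b / lam) / 2)) by (field; lra).
    eapply Rle_trans; [eassumption|]. apply Rmult_le_compat_l; auto.
  - right. field. lra.
Qed.

(** * Trigonometric polynomials and Fejér means *)

Definition centered (m l : nat) : Z := (Z.of_nat l - Z.of_nat m)%Z.

Definition trig_poly (m : nat) (b : Z -> Cx) (t : R) : Cx :=
  Csum (2 * m + 1) (fun l => Cmul (b (centered m l)) (cis (IZR (centered m l) * t))).

Lemma Csum_delta0_centered m (b : Z -> Cx) k : (forall j, (Z.of_nat m < Z.abs j)%Z -> b j = C0) ->
  Csum (2 * m + 1) (fun l => Cmul (b (centered m l)) (delta0 (k - centered m l))) = b k.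
Proof.
  intros Hb. unfold centered. destruct (Z_le_gt_dec (Z.abs k) (Z.of_nat m)) as [Hk|Hk].
  - set (l0 := Z.to_nat (k + Z.of_nat m)). assert (Hl0 : (l0 < 2 * m + 1)%nat) by (unfold l0; lia).
    rewrite <- (Csum_delta (2 * m + 1) l0 (b k) Hl0). apply Csum_ext; intros l Hl.
    unfold delta0. destruct (Nat.eqb l l0) eqn:E.
    + apply Nat.eqb_eq in E. subst l.
      replace (Z.of_nat l0 - Z.of_nat m)%Z with k by (unfold l0; lia).
      rewrite Z.sub_diag. simpl. cx_ring.
    + apply Nat.eqb_neq in E. destruct (Z.eqb (k - (Z.of_nat l - Z.of_nat m)) 0) eqn:E2.
      * apply Z.eqb_eq in E2. exfalso; apply E. unfold l0. lia.
      * cx_ring.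
  - rewrite Hb by lia. rewrite <- (Csum_zero (2 * m + 1)). apply Csum_ext; intros l Hl.
    unfold delta0. destruct (Z.eqb (k - (Z.of_nat l - Z.of_nat m)) 0) eqn:E2.
    + apply Z.eqb_eq in E2. lia.
    + cx_ring.
Qed.

Lemma has_fourier_coeffs_trig_poly m b : (forall j, (Z.of_nat m < Z.abs j)%Z -> b j = C0) ->
  has_fourier_coeffs (trig_poly m b) b.
Proof.
  intros Hb. eapply has_fourier_coeffs_ext; [|intros k; apply (Csum_delta0_centered m b k Hb)].
  apply (has_fourier_coeffs_Csum (2 * m + 1)
           (fun l t => Cmul (b (centered m l)) (cis (IZR (centered m l) * t)))
           (fun l k => Cmul (b (centered m l)) (delta0 (k - centered m l)))).
  intros l _. apply has_fourier_coeffs_scale with (h := fun t => cis (IZR (centered m l) * t))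
                                                (c := fun k => delta0 (k - centered m l)).
  apply has_fourier_coeffs_cis.
Qed.

Lemma Rsum_centered m (g : Z -> R) : Rsum (2 * m + 1) (fun l => g (centered m l)) =
  g 0%Z + Rsum m (fun i => g (Z.of_nat (S i)) + g (- Z.of_nat (S i))%Z).
Proof.
  unfold centered. induction m.
  - simpl. ring.
  - replace (2 * S m + 1)%nat with (S (S (2 * m + 1))) by lia.
    rewrite Rsum_first. change (Rsum (S (2 * m + 1)) ?F) with (Rsum (2 * m + 1) F + F (2 * m + 1)%nat).
    rewrite (Rsum_ext (2 * m + 1) _ (fun l => g (Z.of_nat l - Z.of_nat m)%Z)) by (intros; f_equal; lia).
    rewrite IHm. cbn [Rsum].
    replace (Z.of_nat 0 - Z.of_nat (S m))%Z with (- Z.of_nat (S m))%Z by lia.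
    replace (Z.of_nat (S (2 * m + 1)) - Z.of_nat (S m))%Z with (Z.of_nat (S m)) by lia. ring.
Qed.

Lemma Cmul_cis a b : Cmul (cis a) (cis b) = cis (a + b).
Proof.
  unfold cis, Cmul; simpl. rewrite cos_plus, sin_plus. apply injective_projections; simpl; ring.
Qed.

Lemma Cnorm2_cis a : Cnorm2 (cis a) = 1.
Proof. unfold cis, Cnorm2; simpl. pose proof (sin2_cos2 a). unfold Rsqr in H. lra. Qed.

Lemma Cnorm2_one_sub_cis y : Cnorm2 (Cadd C1 (Cscale (-1) (cis y))) = 2 - 2 * cos y.
Proof.
  unfold Cnorm2, Cadd, Cscale, C1, cis; simpl. pose proof (sin2_cos2 y). unfold Rsqr in H. nra.
Qed.

Definition cis_sum (m : nat) (u : R) : Cx := Csum (S m) (fun j => cis (INR j * u)).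

Lemma cis_sum_succ m u : cis_sum (S m) u = Cadd C1 (Cmul (cis u) (cis_sum m u)).
Proof.
  unfold cis_sum. rewrite Csum_first. f_equal.
  - unfold cis, C1. rewrite Rmult_0_l, cos_0, sin_0; auto.
  - rewrite <- Csum_mul_l. apply Csum_ext; intros. rewrite Cmul_cis. f_equal. rewrite S_INR; ring.
Qed.

Lemma cis_sum_mul_one_sub m u :
  Cmul (cis_sum m u) (Cadd C1 (Cscale (-1) (cis u))) = Cadd C1 (Cscale (-1) (cis (INR (S m) * u))).
Proof.
  induction m.
  - unfold cis_sum. simpl. unfold cis. rewrite Rmult_0_l, Rmult_1_l, cos_0, sin_0. cx_ring.
  - rewrite cis_sum_succ.
    transitivity (Cadd (Cadd C1 (Cscale (-1) (cis u)))
                       (Cmul (cis u) (Cmul (cis_sum m u) (Cadd C1 (Cscale (-1) (cis u)))))).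
    + cx_ring.
    + rewrite IHm, (S_INR (S m)). replace ((INR (S m) + 1) * u) with (u + INR (S m) * u) by ring.
      rewrite <- Cmul_cis. cx_ring.
Qed.

Definition fejer_weight (m : nat) (j : Z) : R := 1 - IZR (Z.abs j) / (INR m + 1).

Definition fejer_kernel (m : nat) (u : R) : R :=
  Rsum (2 * m + 1) (fun l => fejer_weight m (centered m l) * cos (IZR (centered m l) * u)).

Lemma Cnorm2_cis_sum m u :
  Cnorm2 (cis_sum m u) = INR m + 1 + 2 * Rsum m (fun i => (INR m - INR i) * cos (INR (S i) * u)).
Proof.
  induction m.
  - unfold cis_sum. simpl. unfold cis. rewrite Rmult_0_l, cos_0, sin_0. unfold Cnorm2; simpl. ring.
  - rewrite cis_sum_succ.
    assert (E1 : Cnorm2 (Cadd C1 (Cmul (cis u) (cis_sum m u)))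
                 = 1 + 2 * fst (Cmul (cis u) (cis_sum m u)) + Cnorm2 (Cmul (cis u) (cis_sum m u)))
      by (unfold Cnorm2, Cadd, C1; simpl; ring).
    assert (E2 : fst (Cmul (cis u) (cis_sum m u)) = Rsum (S m) (fun i => cos (INR (S i) * u))).
    { unfold cis_sum. rewrite <- Csum_mul_l, fst_Csum. apply Rsum_ext; intros. rewrite Cmul_cis.
      replace (u + INR l * u) with (INR (S l) * u) by (rewrite S_INR; ring). reflexivity. }
    rewrite E1, Cnorm2_mul, Cnorm2_cis, IHm, E2.
    rewrite (Rsum_ext (S m) (fun i => (INR (S m) - INR i) * cos (INR (S i) * u))
               (fun i => (INR m - INR i) * cos (INR (S i) * u) + cos (INR (S i) * u)))
      by (intros; rewrite S_INR; ring).
    rewrite Rsum_add. cbn [Rsum]. rewrite Rminus_diag, S_INR. ring.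
Qed.

Lemma fejer_kernel_eq m u : fejer_kernel m u = Cnorm2 (cis_sum m u) / (INR m + 1).
Proof.
  unfold fejer_kernel. rewrite (Rsum_centered m (fun j => fejer_weight m j * cos (IZR j * u))).
  rewrite Cnorm2_cis_sum. unfold fejer_weight.
  assert (0 < INR m + 1) by (assert (h := pos_INR m); lra).
  rewrite Rmult_0_l, cos_0. change (Z.abs 0) with 0%Z.
  rewrite (Rsum_ext m _ (fun i => (2 / (INR m + 1)) * ((INR m - INR i) * cos (INR (S i) * u)))).
  - rewrite Rsum_scal. field. lra.
  - intros i _. rewrite Z.abs_opp, Z.abs_eq, opp_IZR, <- INR_IZR_INZ by lia.
    replace (- INR (S i) * u) with (- (INR (S i) * u)) by ring. rewrite cos_neg, S_INR. field. lra.
Qed.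

Lemma fejer_kernel_nonneg m u : 0 <= fejer_kernel m u.
Proof.
  rewrite fejer_kernel_eq. apply Rle_mult_inv_pos. apply Cnorm2_nonneg.
  assert (h := pos_INR m); lra.
Qed.

(* Away from [u = 0 (mod 2 pi)], i.e. when [gam <= 2 - 2 cos u = |1 - e^(iu)|^2],
   the telescoping identity [cis_sum_mul_one_sub] gives [|cis_sum| <= 2 / sqrt gam]. *)
Lemma fejer_kernel_le_far m u gam : 0 < gam -> gam <= 2 - 2 * cos u ->
  fejer_kernel m u <= 4 / (gam * (INR m + 1)).
Proof.
  intros Hg Hu. rewrite fejer_kernel_eq. assert (h := pos_INR m).
  assert (E := f_equal Cnorm2 (cis_sum_mul_one_sub m u)).
  rewrite Cnorm2_mul, !Cnorm2_one_sub_cis in E.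
  assert (cos (INR (S m) * u) >= -1) by (pose proof (COS_bound (INR (S m) * u)); lra).
  assert (h2 := Cnorm2_nonneg (cis_sum m u)).
  assert (Cnorm2 (cis_sum m u) * gam <= 4) by nra.
  apply Rmult_le_reg_r with (gam * (INR m + 1)). nra.
  replace (4 / (gam * (INR m + 1)) * (gam * (INR m + 1))) with 4 by (field; lra).
  replace (Cnorm2 (cis_sum m u) / (INR m + 1) * (gam * (INR m + 1)))
    with (Cnorm2 (cis_sum m u) * gam) by (field; lra). lra.
Qed.

Lemma Rsum_fejer_weight_sin m u :
  Rsum (2 * m + 1) (fun l => fejer_weight m (centered m l) * sin (IZR (centered m l) * u)) = 0.
Proof.
  rewrite (Rsum_centered m (fun j => fejer_weight m j * sin (IZR j * u))).
  rewrite Rmult_0_l, sin_0, Rmult_0_r, Rplus_0_l, <- (Rsum_zero m).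
  apply Rsum_ext; intros i _. unfold fejer_weight. rewrite Z.abs_opp, opp_IZR.
  replace (- IZR (Z.of_nat (S i)) * u) with (- (IZR (Z.of_nat (S i)) * u)) by ring.
  rewrite sin_neg. ring.
Qed.

Lemma is_RInt_pi_fejer_kernel m x : is_RInt_pi (fun t => fejer_kernel m (x - t)) (2 * PI).
Proof.
  set (c := fun l => fejer_weight m (centered m l)). set (z := fun l => IZR (centered m l)).
  unfold fejer_kernel.
  apply is_RInt_pi_ext with (f := fun t => Rsum (2 * m + 1) (fun l =>
     c l * (cos (z l * x) * cos (z l * t)) + c l * (sin (z l * x) * sin (z l * t)))).
  { intros t _. apply Rsum_ext; intros. fold (c l) (z l).
    replace (z l * (x - t)) with (z l * x - z l * t) by ring. rewrite cos_minus. ring. }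
  eapply is_RInt_pi_eq.
  { apply (is_RInt_pi_Rsum (2 * m + 1) (fun l t =>
        c l * (cos (z l * x) * cos (z l * t)) + c l * (sin (z l * x) * sin (z l * t)))
      (fun l => c l * (cos (z l * x) * (if Z.eqb (centered m l) 0 then 2 * PI else 0))
                + c l * (sin (z l * x) * 0))).
    intros l _. apply is_RInt_pi_plus; apply is_RInt_pi_scal; apply is_RInt_pi_scal.
    apply is_RInt_pi_cos. apply is_RInt_pi_sin. }
  unfold c, z. rewrite (Rsum_centered m (fun j => fejer_weight m j * (cos (IZR j * x)
                          * (if Z.eqb j 0 then 2 * PI else 0)) + fejer_weight m j * (sin (IZR j * x) * 0))).
  rewrite (Rsum_ext m _ (fun _ => 0)), Rsum_zero.
  - simpl. unfold fejer_weight. simpl. rewrite Rmult_0_l, cos_0. field.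
    assert (h := pos_INR m); lra.
  - intros i _. replace (Z.eqb (Z.of_nat (S i)) 0) with false by (symmetry; apply Z.eqb_neq; lia).
    replace (Z.eqb (- Z.of_nat (S i)) 0) with false by (symmetry; apply Z.eqb_neq; lia). ring.
Qed.

Definition cesaro_coeffs (m : nat) (a : Z -> Cx) (j : Z) : Cx :=
  if Z.leb (Z.abs j) (Z.of_nat m) then Cscale (fejer_weight m j) (a j) else C0.

Lemma cesaro_coeffs_out m a j : (Z.of_nat m < Z.abs j)%Z -> cesaro_coeffs m a j = C0.
Proof.
  intros H. unfold cesaro_coeffs. replace (Z.leb (Z.abs j) (Z.of_nat m)) with false; auto.
  symmetry. apply Z.leb_gt. auto.
Qed.

Lemma cesaro_coeffs_centered m a l : (l < 2 * m + 1)%nat ->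
  cesaro_coeffs m a (centered m l) = Cscale (fejer_weight m (centered m l)) (a (centered m l)).
Proof.
  intros H. unfold cesaro_coeffs. replace (Z.leb (Z.abs (centered m l)) (Z.of_nat m)) with true; auto.
  symmetry. apply Z.leb_le. unfold centered. lia.
Qed.

(* The Fejér mean [trig_poly m (cesaro_coeffs m a)] is the convolution of [f] with
   the Fejér kernel; [fejer_kernel_expand] is that convolution under the integral. *)
Lemma fejer_kernel_expand m x t y :
  Cscale (fejer_kernel m (x - t)) y =
  Csum (2 * m + 1) (fun l =>
    Cmul (Cscale (fejer_weight m (centered m l)) (cis (IZR (centered m l) * x)))
         (Cmul y (cexp_neg (centered m l) t))).
Proof.
  rewrite (Csum_ext _ _ (fun l => Cmul y (Cscale (fejer_weight m (centered m l))
                                                  (cis (IZR (centered m l) * (x - t)))))).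
  - rewrite Csum_mul_l.
    replace (Csum (2 * m + 1) _) with (fejer_kernel m (x - t), 0); [cx_ring|].
    apply injective_projections; [rewrite fst_Csum | rewrite snd_Csum]; simpl.
    + reflexivity.
    + symmetry. apply Rsum_fejer_weight_sin.
  - intros l _. replace (IZR (centered m l) * (x - t))
      with (IZR (centered m l) * x - IZR (centered m l) * t) by ring.
    unfold cis, cexp_neg. rewrite cos_minus, sin_minus. cx_ring.
Qed.

Lemma fejer_mean_integral f a m x : has_fourier_coeffs f a ->
  is_RInt_pi (fun t => fst (f t) * fejer_kernel m (x - t))
    (2 * PI * fst (trig_poly m (cesaro_coeffs m a) x)) /\
  is_RInt_pi (fun t => snd (f t) * fejer_kernel m (x - t))
    (2 * PI * snd (trig_poly m (cesaro_coeffs m a) x)).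
Proof.
  intros H.
  set (w := fun l => Cscale (fejer_weight m (centered m l)) (cis (IZR (centered m l) * x))).
  set (g := fun l t => Cmul (Cmul (w l) (f t)) (cexp_neg (centered m l) t)).
  assert (Hval : trig_poly m (cesaro_coeffs m a) x =
                 Csum (2 * m + 1) (fun l => Cmul (w l) (a (centered m l)))).
  { unfold trig_poly. apply Csum_ext; intros l Hl. rewrite cesaro_coeffs_centered by auto.
    unfold w. cx_ring. }
  assert (Hexp : forall t,
            Cscale (fejer_kernel m (x - t)) (f t) = Csum (2 * m + 1) (fun l => g l t)).
  { intros t. rewrite fejer_kernel_expand. apply Csum_ext; intros. unfold g, w. cx_ring. }
  rewrite Hval, fst_Csum, snd_Csum, <- !Rsum_scal. split.
  - apply is_RInt_pi_ext with (f := fun t => Rsum (2 * m + 1) (fun l => fst (g l t))).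
    + intros t _. transitivity (fst (Cscale (fejer_kernel m (x - t)) (f t))).
      * rewrite Hexp, fst_Csum. reflexivity.
      * unfold Cscale; simpl. ring.
    + apply (is_RInt_pi_Rsum (2 * m + 1) (fun l t => fst (g l t))). intros l _.
      apply (proj1 (has_fourier_coeffs_scale f a (w l) H (centered m l))).
  - apply is_RInt_pi_ext with (f := fun t => Rsum (2 * m + 1) (fun l => snd (g l t))).
    + intros t _. transitivity (snd (Cscale (fejer_kernel m (x - t)) (f t))).
      * rewrite Hexp, snd_Csum. reflexivity.
      * unfold Cscale; simpl. ring.
    + apply (is_RInt_pi_Rsum (2 * m + 1) (fun l t => snd (g l t))). intros l _.
      apply (proj2 (has_fourier_coeffs_scale f a (w l) H (centered m l))).
Qed.

Lemma fejer_mean_error_le (phi : R -> R) psix x m e1 tau :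
  (forall t, - PI < t < PI ->
     Rabs (phi t - phi x) * fejer_kernel m (x - t) <= e1 * fejer_kernel m (x - t) + tau) ->
  is_RInt_pi (fun t => phi t * fejer_kernel m (x - t)) (2 * PI * psix) ->
  Rabs (psix - phi x) <= e1 + tau.
Proof.
  intros Hp HR. assert (HP := PI_RGT_0).
  assert (I1 := is_RInt_pi_minus _ _ _ _ HR
                 (is_RInt_pi_scal (phi x) _ _ (is_RInt_pi_fejer_kernel m x))).
  assert (I2 := is_RInt_pi_plus _ _ _ _ (is_RInt_pi_scal e1 _ _ (is_RInt_pi_fejer_kernel m x))
                                    (is_RInt_pi_const tau)).
  assert (Hk : forall t, - PI < t < PI ->
     Rabs ((phi t - phi x) * fejer_kernel m (x - t)) <= e1 * fejer_kernel m (x - t) + tau).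
  { intros t Ht. rewrite Rabs_mult, (Rabs_right (fejer_kernel m (x - t))); auto.
    apply Rle_ge, fejer_kernel_nonneg. }
  assert (2 * PI * psix - phi x * (2 * PI) <= e1 * (2 * PI) + 2 * PI * tau).
  { apply (is_RInt_pi_le _ _ _ _ I1 I2). intros t Ht. specialize (Hk t Ht).
    pose proof (Rle_abs ((phi t - phi x) * fejer_kernel m (x - t))). lra. }
  assert (- (e1 * (2 * PI) + 2 * PI * tau) <= 2 * PI * psix - phi x * (2 * PI)).
  { apply (is_RInt_pi_le _ _ _ _ (is_RInt_pi_opp _ _ I2) I1). intros t Ht. specialize (Hk t Ht).
    pose proof (Rabs_maj2 ((phi t - phi x) * fejer_kernel m (x - t))). lra. }
  apply Rabs_le. split; apply Rmult_le_reg_l with (2 * PI); lra.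
Qed.

Lemma near_mod_2pi_of_cos_lt x t d : - PI <= x <= PI -> - PI <= t <= PI -> 0 < d < PI ->
  cos d < cos (x - t) ->
  Rabs (t - x) < d \/ Rabs (t - (x - 2 * PI)) < d \/ Rabs (t - (x + 2 * PI)) < d.
Proof.
  intros Hx Ht Hd Hc. remember (x - t) as u.
  assert (D : forall y, 0 <= y <= PI -> cos d < cos y -> y < d).
  { intros y Hy Hcy. destruct (Rlt_or_le y d); auto. destruct (Req_dec y d). subst; lra.
    assert (cos y < cos d) by (apply cos_decreasing_1; lra). lra. }
  destruct (Rle_or_lt 0 u); [destruct (Rle_or_lt u PI) | destruct (Rle_or_lt (- PI) u)].
  - left. assert (u < d) by (apply D; lra). rewrite Rabs_left1 by lra. lra.
  - right; left. assert (2 * PI - u < d).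
    { apply D. lra. rewrite cos_minus, cos_2PI, sin_2PI. lra. }
    rewrite Rabs_right by lra. lra.
  - left. assert (- u < d) by (apply D; [lra | rewrite cos_neg; auto]). rewrite Rabs_right by lra. lra.
  - right; right. assert (u + 2 * PI < d).
    { apply D. lra. rewrite cos_plus, cos_2PI, sin_2PI. lra. }
    rewrite Rabs_left1 by lra. lra.
Qed.

(* Near [x] the integrand is controlled by uniform continuity, far from [x] by
   [fejer_kernel_le_far]. *)
Lemma fejer_integrand_le (phi : R -> R) Kf e1 d m x t : 0 < d < PI -> 0 <= e1 ->
  (forall y, - PI <= y <= PI -> Rabs (phi y) <= Kf) ->
  (forall y z, -3 * PI <= y <= 3 * PI -> -3 * PI <= z <= 3 * PI -> Rabs (y - z) < d ->
     Rabs (phi y - phi z) < e1) ->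
  (forall y, phi (y + 2 * PI) = phi y) -> - PI < x < PI -> - PI < t < PI ->
  Rabs (phi t - phi x) * fejer_kernel m (x - t)
    <= e1 * fejer_kernel m (x - t) + 2 * Kf * (4 / ((2 - 2 * cos d) * (INR m + 1))).
Proof.
  intros Hd He Hb Hu Hper Hx Ht. assert (HP := PI_RGT_0).
  assert (hF := fejer_kernel_nonneg m (x - t)).
  assert (Hg : 0 < 2 - 2 * cos d).
  { assert (cos d < cos 0) by (apply cos_decreasing_1; lra). rewrite cos_0 in H. lra. }
  assert (Hm : 0 < INR m + 1) by (assert (h := pos_INR m); lra).
  assert (0 <= Rabs (phi t - phi x)) by apply Rabs_pos.
  destruct (Rle_or_lt (cos (x - t)) (cos d)) as [Hfar|Hnear].
  - assert (fejer_kernel m (x - t) <= 4 / ((2 - 2 * cos d) * (INR m + 1)))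
      by (apply fejer_kernel_le_far; lra).
    assert (Rabs (phi t - phi x) <= 2 * Kf).
    { eapply Rle_trans. apply Rabs_triang. rewrite Rabs_Ropp.
      assert (h1 := Hb t ltac:(lra)). assert (h2 := Hb x ltac:(lra)). lra. }
    assert (0 <= e1 * fejer_kernel m (x - t)) by (apply Rmult_le_pos; auto).
    assert (Rabs (phi t - phi x) * fejer_kernel m (x - t)
            <= 2 * Kf * (4 / ((2 - 2 * cos d) * (INR m + 1)))) by (apply Rmult_le_compat; auto).
    lra.
  - assert (Rabs (phi t - phi x) <= e1).
    { destruct (near_mod_2pi_of_cos_lt x t d ltac:(lra) ltac:(lra) Hd Hnear) as [N|[N|N]].
      - left. apply Hu; lra.
      - replace (phi x) with (phi (x - 2 * PI)). left. apply Hu; lra.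
        rewrite <- (Hper (x - 2 * PI)). f_equal. ring.
      - rewrite <- (Hper x). left. apply Hu; lra. }
    assert (0 <= 2 * Kf * (4 / ((2 - 2 * cos d) * (INR m + 1)))).
    { assert (h := Rabs_pos (phi x)). assert (Kf >= 0) by (specialize (Hb x ltac:(lra)); lra).
      apply Rmult_le_pos. lra. apply Rle_mult_inv_pos. lra. nra. }
    assert (Rabs (phi t - phi x) * fejer_kernel m (x - t) <= e1 * fejer_kernel m (x - t))
      by (apply Rmult_le_compat_r; auto).
    lra.
Qed.

Lemma continuity_bounded_pi (phi : R -> R) : continuity phi ->
  exists K, 0 <= K /\ forall y, - PI <= y <= PI -> Rabs (phi y) <= K.
Proof.
  intros Hc. assert (HP := PI_RGT_0).
  destruct (continuity_ab_maj phi (- PI) PI ltac:(lra) (fun c _ => Hc c)) as [M [HM _]].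
  destruct (continuity_ab_maj (fun y => - phi y) (- PI) PI ltac:(lra)
              (fun c _ => continuity_opp _ Hc c)) as [N [HN _]].
  exists (Rabs (phi M) + Rabs (phi N)). split.
  - assert (h1 := Rabs_pos (phi M)); assert (h2 := Rabs_pos (phi N)); lra.
  - intros y Hy. specialize (HM y Hy). specialize (HN y Hy). simpl in HN.
    assert (h1 := Rle_abs (phi M)). assert (h2 := Rabs_pos (phi N)).
    assert (h3 := Rle_abs (- phi N)). rewrite Rabs_Ropp in h3.
    assert (h4 := Rabs_pos (phi M)). apply Rabs_le. lra.
Qed.

Lemma fejer_approx_component (phi : R -> R) (psi : nat -> R -> R) eps :
  continuity phi -> (forall y, phi (y + 2 * PI) = phi y) ->
  (forall m x, is_RInt_pi (fun t => phi t * fejer_kernel m (x - t)) (2 * PI * psi m x)) ->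
  0 < eps ->
  exists M, forall m x, (M <= m)%nat -> - PI < x < PI -> Rabs (psi m x - phi x) <= eps.
Proof.
  intros Hc Hper Hpsi Heps. assert (HP := PI_RGT_0).
  destruct (continuity_bounded_pi _ Hc) as [Kf [HKf Hb]].
  destruct (Heine_cor2 (f := phi) (a := -3 * PI) (b := 3 * PI) (fun c _ => Hc c)
              (mkposreal (eps / 2) ltac:(lra))) as [[d0 Hd0] Hu]. simpl in Hu.
  set (d := Rmin d0 (PI / 2)).
  assert (Hd : 0 < d < PI)
    by (unfold d; split; [apply Rmin_pos | assert (h := Rmin_r d0 (PI / 2))]; lra).
  assert (Hdd0 : d <= d0) by apply Rmin_l.
  set (gam := 2 - 2 * cos d).
  assert (Hg : 0 < gam).
  { unfold gam. assert (cos d < cos 0) by (apply cos_decreasing_1; lra). rewrite cos_0 in H. lra. }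
  exists (Z.to_nat (up (16 * Kf / (gam * eps)))). intros m x Hm Hx.
  assert (HmK : 16 * Kf / (gam * eps) <= INR m + 1) by (apply le_INR_of_up_le in Hm; lra).
  assert (Hpos : 0 < INR m + 1) by (assert (h := pos_INR m); lra).
  assert (Htau : 2 * Kf * (4 / (gam * (INR m + 1))) <= eps / 2).
  { apply Rmult_le_reg_r with (INR m + 1); auto.
    replace (2 * Kf * (4 / (gam * (INR m + 1))) * (INR m + 1))
      with (16 * Kf / (gam * eps) * (eps / 2)) by (field; lra).
    rewrite (Rmult_comm (eps / 2)). apply Rmult_le_compat_r; lra. }
  eapply Rle_trans.
  - apply (fejer_mean_error_le phi _ x m (eps / 2) (2 * Kf * (4 / (gam * (INR m + 1))))); [|apply Hpsi].
    intros t Ht. apply (fejer_integrand_le phi Kf (eps / 2) d m x t Hd); auto; try lra.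
    intros y z Hy Hz Hyz. apply Hu; auto. lra.
  - lra.
Qed.

Lemma fejer_uniform_approx f a eps : in_C2pi f -> has_fourier_coeffs f a -> 0 < eps ->
  exists m, forall x, - PI < x < PI ->
    Cmod (Cadd (f x) (Cmul (RtoC (-1)) (trig_poly m (cesaro_coeffs m a) x))) <= eps.
Proof.
  intros [Hc1 [Hc2 Hper]] HF Heps. unfold Cre, Cim in *.
  set (p := fun m x => trig_poly m (cesaro_coeffs m a) x).
  destruct (fejer_approx_component (fun y => fst (f y)) (fun m x => fst (p m x)) (eps / 2) Hc1)
    as [M1 H1].
  { intros y. rewrite Hper. auto. }
  { intros m x. apply (fejer_mean_integral f a m x HF). }
  { lra. }
  destruct (fejer_approx_component (fun y => snd (f y)) (fun m x => snd (p m x)) (eps / 2) Hc2)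
    as [M2 H2].
  { intros y. rewrite Hper. auto. }
  { intros m x. apply (fejer_mean_integral f a m x HF). }
  { lra. }
  exists (Nat.max M1 M2). intros x Hx.
  specialize (H1 (Nat.max M1 M2) x ltac:(lia) Hx). specialize (H2 (Nat.max M1 M2) x ltac:(lia) Hx).
  unfold p in H1, H2. set (P := trig_poly (Nat.max M1 M2) (cesaro_coeffs (Nat.max M1 M2) a) x) in *.
  rewrite Rabs_minus_sym in H1, H2.
  eapply Rle_trans. apply Cmod_le_abs_fst_snd. unfold Cadd, Cmul, RtoC; simpl.
  replace (fst (f x) + (-1 * fst P - 0 * snd P)) with (fst (f x) - fst P) by ring.
  replace (snd (f x) + (-1 * snd P + 0 * fst P)) with (snd (f x) - snd P) by ring.
  lra.
Qed.

(** * The optimal circulant is an average of cyclic shifts *)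

Lemma Nat_mod_sub_once a n : (n <= a < 2 * n)%nat -> (a mod n = a - n)%nat.
Proof.
  intros H. replace a with ((a - n) + 1 * n)%nat at 1 by lia.
  rewrite Nat.Div0.mod_add. apply Nat.mod_small. lia.
Qed.

Lemma Nat_mod_sub_twice a n : (2 * n <= a < 3 * n)%nat -> (a mod n = a - 2 * n)%nat.
Proof.
  intros H. replace a with ((a - 2 * n) + 2 * n)%nat at 1 by lia.
  rewrite Nat.Div0.mod_add. apply Nat.mod_small. lia.
Qed.

Lemma Csum_rot1 n (G : nat -> Cx) : Csum n (fun j => G ((j + 1) mod n)%nat) = Csum n G.
Proof.
  destruct n. reflexivity.
  change (Csum (S n) (fun j => G ((j + 1) mod S n)%nat))
    with (Cadd (Csum n (fun j => G ((j + 1) mod S n)%nat)) (G ((n + 1) mod S n)%nat)).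
  rewrite Csum_first, (Csum_ext n _ (fun l => G (S l))).
  - replace ((n + 1) mod S n)%nat with O. cx_ring.
    rewrite Nat.add_1_r. symmetry. apply Nat.Div0.mod_same.
  - intros l Hl. rewrite Nat.mod_small by lia. f_equal; lia.
Qed.

Lemma Csum_rot n (F : nat -> Cx) s :
  (0 < n)%nat -> Csum n (fun j => F ((j + s) mod n)%nat) = Csum n F.
Proof.
  intros Hn. induction s.
  - apply Csum_ext; intros. rewrite Nat.add_0_r, Nat.mod_small; auto.
  - rewrite <- IHs, <- (Csum_rot1 n (fun j => F ((j + s) mod n)%nat)).
    apply Csum_ext; intros j Hj. f_equal. rewrite Nat.Div0.add_mod_idemp_l. f_equal. lia.
Qed.

Lemma Nat_mod_shift_back n s j :
  (j < n)%nat -> (s <= n)%nat -> (((j + s) mod n + (n - s)) mod n = j)%nat.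
Proof.
  intros Hj Hs. rewrite Nat.Div0.add_mod_idemp_l.
  replace (j + s + (n - s))%nat with (j + 1 * n)%nat by lia.
  rewrite Nat.Div0.mod_add. apply Nat.mod_small; auto.
Qed.

Lemma Csum_toeplitz_shift_reindex n c j k : (j < n)%nat -> (k < n)%nat ->
  Csum n (fun s => c (Z.of_nat ((j + s) mod n) - Z.of_nat ((k + s) mod n))%Z) =
  Csum n (fun p => c (Z.of_nat ((p + (j + n - k)) mod n) - Z.of_nat p)%Z).
Proof.
  intros Hj Hk. assert (Hn : (0 < n)%nat) by lia.
  rewrite <- (Csum_rot n (fun p => c (Z.of_nat ((p + (j + n - k)) mod n) - Z.of_nat p)%Z) k Hn).
  apply Csum_ext; intros s Hs. cbv beta. do 3 f_equal.
  - rewrite Nat.Div0.add_mod_idemp_l.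
    replace (s + k + (j + n - k))%nat with ((j + s) + 1 * n)%nat by lia.
    rewrite Nat.Div0.mod_add. auto.
  - f_equal. lia.
Qed.

Lemma Csum_toeplitz_shift n c j k : (j < n)%nat -> (k < n)%nat ->
  Csum n (fun s => c (Z.of_nat ((j + s) mod n) - Z.of_nat ((k + s) mod n))%Z)
  = Cscale (INR n) (opt_circulant n c j k).
Proof.
  intros Hj Hk. rewrite Csum_toeplitz_shift_reindex by auto.
  assert (HnR : INR n <> 0) by (apply not_0_INR; lia).
  unfold opt_circulant, circ_coeff. destruct (le_lt_dec k j) as [Hkj|Hkj].
  - set (d := (j - k)%nat).
    replace (Z.to_nat ((Z.of_nat j - Z.of_nat k) mod Z.of_nat n)) with d
      by (unfold d; rewrite Z.mod_small by lia; lia).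
    replace n with ((n - d) + d)%nat at 1 by lia. rewrite Csum_split.
    rewrite (Csum_ext (n - d) _ (fun _ => c (Z.of_nat d)))
      by (intros p Hp; f_equal; rewrite Nat_mod_sub_once by lia; unfold d; lia).
    rewrite (Csum_ext d _ (fun _ => c (Z.of_nat d - Z.of_nat n)%Z))
      by (intros q Hq; f_equal; rewrite Nat_mod_sub_twice by lia; unfold d; lia).
    rewrite !Csum_const, minus_INR by lia.
    unfold Cscale, Cadd. apply injective_projections; simpl; field; auto.
  - set (d := (k - j)%nat).
    replace (Z.to_nat ((Z.of_nat j - Z.of_nat k) mod Z.of_nat n)) with (n - d)%nat.
    2: { replace (Z.of_nat j - Z.of_nat k)%Z with (Z.of_nat (n - d) + (-1) * Z.of_nat n)%Z
           by (unfold d; lia).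
         rewrite Z.mod_add, Z.mod_small by lia. lia. }
    replace n with (d + (n - d))%nat at 1 by lia. rewrite Csum_split.
    rewrite (Csum_ext d _ (fun _ => c (Z.of_nat (n - d))))
      by (intros p Hp; f_equal; rewrite Nat.mod_small by lia; unfold d; lia).
    rewrite (Csum_ext (n - d) _ (fun _ => c (Z.of_nat (n - d) - Z.of_nat n)%Z))
      by (intros q Hq; f_equal; rewrite Nat_mod_sub_once by lia; unfold d; lia).
    rewrite !Csum_const, minus_INR by lia.
    unfold Cscale, Cadd. apply injective_projections; simpl; field; auto.
Qed.

Definition cshift (n s : nat) (u : Vec) : Vec := fun i => u ((i + (n - s)) mod n)%nat.

Lemma vnorm2_cshift n s u : (0 < n)%nat -> vnorm2 n (cshift n s u) = vnorm2 n u.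
Proof.
  intros Hn. rewrite <- !fst_cdot_self. unfold cdot, cshift. f_equal.
  apply (Csum_rot n (fun i => Cmul (Cconj (u i)) (u i)) (n - s) Hn).
Qed.

Lemma cdot_cshift n s w (T : Mat) v : (0 < n)%nat -> (s < n)%nat ->
  cdot n (cshift n s w) (mvmul n T (cshift n s v)) =
  Csum n (fun j => Cmul (Cconj (w j))
                        (Csum n (fun k => Cmul (T ((j + s) mod n)%nat ((k + s) mod n)%nat) (v k)))).
Proof.
  intros Hn Hs. unfold cdot, mvmul.
  rewrite <- (Csum_rot n (fun j' => Cmul (Cconj (cshift n s w j'))
                                         (Csum n (fun k' => Cmul (T j' k') (cshift n s v k')))) s Hn).
  apply Csum_ext; intros j Hj. cbv beta. unfold cshift at 1. rewrite Nat_mod_shift_back by lia. f_equal.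
  rewrite <- (Csum_rot n (fun k' => Cmul (T ((j + s) mod n)%nat k') (cshift n s v k')) s Hn).
  apply Csum_ext; intros k Hk. unfold cshift. rewrite Nat_mod_shift_back by lia. auto.
Qed.

Lemma cdot_opt_circulant n c w v : (0 < n)%nat ->
  Cscale (INR n) (cdot n w (mvmul n (opt_circulant n c) v))
  = Csum n (fun s => cdot n (cshift n s w) (mvmul n (toeplitz c) (cshift n s v))).
Proof.
  intros Hn. rewrite (Csum_ext n _ (fun s => Csum n (fun j => Cmul (Cconj (w j))
       (Csum n (fun k => Cmul (toeplitz c ((j + s) mod n)%nat ((k + s) mod n)%nat) (v k))))))
    by (intros s Hs; apply cdot_cshift; auto).
  rewrite Csum_swap. unfold cdot. rewrite <- Csum_scale. apply Csum_ext; intros j Hj.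
  rewrite Csum_mul_l.
  transitivity (Cmul (Cconj (w j)) (Cscale (INR n) (mvmul n (opt_circulant n c) v j))). cx_ring.
  f_equal. unfold mvmul. rewrite <- Csum_scale, Csum_swap. apply Csum_ext; intros k Hk.
  rewrite Csum_mul_r. unfold toeplitz. rewrite Csum_toeplitz_shift by auto. cx_ring.
Qed.

Lemma opnorm_opt_circulant_le n c K : (0 < n)%nat -> 0 <= K ->
  opnorm_le n (toeplitz c) K -> opnorm_le n (opt_circulant n c) K.
Proof.
  intros Hn HK HT. apply opnorm_le_of_form_bound; auto. intros v w lam Hl.
  apply form_bound_of_opnorm_le in HT; auto.
  assert (E := f_equal fst (cdot_opt_circulant n c w v Hn)). rewrite fst_Csum in E.
  unfold Cscale in E; simpl in E.
  assert (Hn' : 0 < INR n) by (apply lt_0_INR; auto).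
  apply Rmult_le_reg_l with (INR n); auto. rewrite E.
  rewrite <- Rsum_const. apply Rsum_le; intros s Hs.
  rewrite <- (vnorm2_cshift n s w), <- (vnorm2_cshift n s v) by auto. apply HT; auto.
Qed.

(** * Band matrices and the corners of [T_n(b) - c_n(b)] *)

Definition band_ind (m i j : nat) : R :=
  if andb (Nat.leb j (i + m)) (Nat.leb i (j + m)) then 1 else 0.

Lemma band_ind_nonneg m i j : 0 <= band_ind m i j.
Proof. unfold band_ind. destruct (andb _ _); lra. Qed.

Lemma band_ind_sym m i j : band_ind m i j = band_ind m j i.
Proof. unfold band_ind. rewrite Bool.andb_comm. auto. Qed.

Lemma Rsum_indicator_interval n lo hi :
  Rsum n (fun j => if andb (Nat.leb lo j) (Nat.ltb j hi) then 1 else 0) = INR (Nat.min n hi - lo).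
Proof.
  induction n. reflexivity. cbn [Rsum]. rewrite IHn.
  destruct (andb (Nat.leb lo n) (Nat.ltb n hi)) eqn:E.
  - apply andb_prop in E as [E1 E2]. apply Nat.leb_le in E1. apply Nat.ltb_lt in E2.
    replace (Nat.min (S n) hi - lo)%nat with (S (Nat.min n hi - lo)) by lia. rewrite S_INR. ring.
  - apply Bool.andb_false_iff in E.
    replace (Nat.min (S n) hi - lo)%nat with (Nat.min n hi - lo)%nat.
    + ring.
    + destruct E as [E|E]; [apply Nat.leb_gt in E | apply Nat.ltb_ge in E]; lia.
Qed.

Lemma Rsum_band_ind_le n m i : Rsum n (fun j => band_ind m i j) <= INR (2 * m + 1).
Proof.
  rewrite (Rsum_ext n _ (fun j => if andb (Nat.leb (i - m) j) (Nat.ltb j (i + m + 1)) then 1 else 0)).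
  - rewrite Rsum_indicator_interval. apply le_INR. lia.
  - intros j _. unfold band_ind.
    destruct (Nat.leb j (i + m)) eqn:E1; destruct (Nat.leb i (j + m)) eqn:E2;
    destruct (Nat.leb (i - m) j) eqn:E3; destruct (Nat.ltb j (i + m + 1)) eqn:E4; simpl; auto;
    repeat match goal with
           | H : Nat.leb _ _ = true |- _ => apply Nat.leb_le in H
           | H : Nat.leb _ _ = false |- _ => apply Nat.leb_gt in H
           | H : Nat.ltb _ _ = true |- _ => apply Nat.ltb_lt in H
           | H : Nat.ltb _ _ = false |- _ => apply Nat.ltb_ge in H
           end; lia.
Qed.

Lemma Cx_eq_dec (z : Cx) : {z = C0} + {z <> C0}.
Proof.
  destruct z as [x y]. destruct (Req_EM_T x 0); destruct (Req_EM_T y 0); subst;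
    [left; reflexivity | right; intros H; inversion H; auto ..].
Qed.

Lemma banded_term_le (x y z : Cx) gam lam ind :
  0 < lam -> Cmod y <= gam -> (y <> C0 -> ind = 1) -> 0 <= ind ->
  fst (Cmul (Cconj x) (Cmul y z)) <= ind * (gam / 2) * (lam * Cnorm2 x + Cnorm2 z / lam).
Proof.
  intros Hl Hy Hind Hind0. assert (Hg : 0 <= gam) by (eapply Rle_trans; [apply Cmod_nonneg | eauto]).
  assert (0 <= lam * Cnorm2 x + Cnorm2 z / lam).
  { assert (0 <= Cnorm2 x) by apply Cnorm2_nonneg. assert (0 <= Cnorm2 z / lam)
      by (apply Rle_mult_inv_pos; [apply Cnorm2_nonneg | lra]). nra. }
  destruct (Cx_eq_dec y) as [E|E].
  - subst. unfold Cmul, Cconj, C0; simpl.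
    replace (fst x * (0 * fst z - 0 * snd z) - - snd x * (0 * snd z + 0 * fst z)) with 0 by ring.
    apply Rmult_le_pos; auto. apply Rmult_le_pos; lra.
  - rewrite (Hind E). eapply Rle_trans. apply fst_le_Cmod. rewrite !Cmod_mul, Cmod_conj.
    assert (hx := Cmod_nonneg x). assert (hz := Cmod_nonneg z).
    assert (Cmod x * (Cmod y * Cmod z) <= gam * (Cmod x * Cmod z)).
    { rewrite Rmult_comm, Rmult_assoc, (Rmult_comm (Cmod z)).
      apply Rmult_le_compat_r; auto. nra. }
    assert (h2 := mul_le_amgm (Cmod x) (Cmod z) lam Hl). rewrite !Cmod_sq in h2.
    assert (gam * (Cmod x * Cmod z) <= gam * ((lam * Cnorm2 x + Cnorm2 z / lam) / 2))
      by (apply Rmult_le_compat_l; auto).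
    replace (1 * (gam / 2) * (lam * Cnorm2 x + Cnorm2 z / lam))
      with (gam * ((lam * Cnorm2 x + Cnorm2 z / lam) / 2)) by (field; lra).
    lra.
Qed.

(* Schur's test: row and column sums of [|X_ij|] are at most [(2m + 1) gam]. *)
Lemma opnorm_banded_le n X m gam : 0 <= gam ->
  (forall i j, (i < n)%nat -> (j < n)%nat -> Cmod (X i j) <= gam) ->
  (forall i j, (i < n)%nat -> (j < n)%nat -> X i j <> C0 -> (j <= i + m /\ i <= j + m)%nat) ->
  opnorm_le n X (INR (2 * m + 1) * gam).
Proof.
  intros Hg Hb Hs. apply opnorm_le_of_form_bound. apply Rmult_le_pos; auto. apply pos_INR.
  intros v w lam Hl. unfold cdot, mvmul. rewrite fst_Csum.
  eapply Rle_trans.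
  { apply Rsum_le. intros i Hi. rewrite <- Csum_mul_l, fst_Csum. apply Rsum_le. intros j Hj.
    apply (banded_term_le (w i) (X i j) (v j) gam lam (band_ind m i j) Hl (Hb i j Hi Hj)).
    - intros E. destruct (Hs i j Hi Hj E). unfold band_ind.
      replace (andb (Nat.leb j (i + m)) (Nat.leb i (j + m))) with true; auto.
      symmetry. apply andb_true_intro. split; apply Nat.leb_le; auto.
    - apply band_ind_nonneg. }
  rewrite (Rsum_ext n _ (fun i => (gam / 2 * lam) * (Cnorm2 (w i) * Rsum n (fun j => band_ind m i j))
                  + (gam / 2 / lam) * Rsum n (fun j => band_ind m i j * Cnorm2 (v j)))).
  2: { intros i _. rewrite <- !Rsum_scal, <- Rsum_add. apply Rsum_ext; intros; field; lra. }
  rewrite Rsum_add, !Rsum_scal, Rsum_swap.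
  rewrite (Rsum_ext n (fun j => Rsum n (fun i => band_ind m i j * Cnorm2 (v j)))
                      (fun j => Cnorm2 (v j) * Rsum n (fun i => band_ind m j i))).
  2: { intros j _. rewrite <- Rsum_scal. apply Rsum_ext; intros. rewrite band_ind_sym. ring. }
  assert (A : forall u : Vec,
             Rsum n (fun i => Cnorm2 (u i) * Rsum n (fun j => band_ind m i j)) <= INR (2 * m + 1) * vnorm2 n u).
  { intros u. unfold vnorm2. rewrite <- Rsum_scal. apply Rsum_le; intros i _.
    rewrite Rmult_comm. apply Rmult_le_compat_r. apply Cnorm2_nonneg. apply Rsum_band_ind_le. }
  assert (A1 := A w). assert (A2 := A v).
  assert (0 <= gam / 2 * lam) by (apply Rmult_le_pos; lra).
  assert (0 <= gam / 2 / lam) by (apply Rle_mult_inv_pos; lra).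
  replace (INR (2 * m + 1) * gam / 2 * (lam * vnorm2 n w + vnorm2 n v / lam))
    with (gam / 2 * lam * (INR (2 * m + 1) * vnorm2 n w) + gam / 2 / lam * (INR (2 * m + 1) * vnorm2 n v))
    by (field; lra).
  apply Rplus_le_compat; apply Rmult_le_compat_l; auto.
Qed.

(* For a symbol [b] supported in [-m, m] and [n > 2m], [T_n(b) - c_n(b)] is this
   band (entries [|i - j| / n * b(i - j)]) plus a matrix supported on the first
   and last [m] rows, where the wrap-around terms [b(k - n)] of [c_n] live. *)
Definition circ_band (n : nat) (b : Z -> Cx) : Mat := fun i j =>
  Cscale (IZR (Z.abs (Z.of_nat i - Z.of_nat j)) / INR n) (b (Z.of_nat i - Z.of_nat j)%Z).

Definition circ_corner (n : nat) (b : Z -> Cx) : Mat :=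
  msub (msub (toeplitz b) (opt_circulant n b)) (circ_band n b).

Lemma circ_corner_middle_rows n m b : (forall j, (Z.of_nat m < Z.abs j)%Z -> b j = C0) ->
  (2 * m < n)%nat -> forall i j, (i < n)%nat -> (j < n)%nat -> (m <= i < n - m)%nat ->
  circ_corner n b i j = C0.
Proof.
  intros Hb Hn i j Hi Hj Hm. assert (Hn0 : INR n <> 0) by (apply not_0_INR; lia).
  unfold circ_corner, msub, madd, mscale, circ_band, toeplitz, opt_circulant, circ_coeff.
  destruct (le_lt_dec j i) as [Hji|Hji].
  - set (d := (i - j)%nat).
    replace (Z.to_nat ((Z.of_nat i - Z.of_nat j) mod Z.of_nat n)) with d
      by (unfold d; rewrite Z.mod_small by lia; lia).
    replace (Z.of_nat i - Z.of_nat j)%Z with (Z.of_nat d) by (unfold d; lia).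
    rewrite (Hb (Z.of_nat d - Z.of_nat n)%Z) by (unfold d; lia).
    rewrite Z.abs_eq, <- INR_IZR_INZ by lia.
    unfold Cscale, Cadd, Cmul, RtoC, C0; apply injective_projections; simpl; field; auto.
  - set (d := (j - i)%nat).
    replace (Z.to_nat ((Z.of_nat i - Z.of_nat j) mod Z.of_nat n)) with (n - d)%nat.
    2: { replace (Z.of_nat i - Z.of_nat j)%Z with (Z.of_nat (n - d) + (-1) * Z.of_nat n)%Z
           by (unfold d; lia).
         rewrite Z.mod_add, Z.mod_small by lia. lia. }
    rewrite (Hb (Z.of_nat (n - d))) by (unfold d; lia).
    replace (Z.of_nat (n - d) - Z.of_nat n)%Z with (Z.of_nat i - Z.of_nat j)%Z by (unfold d; lia).
    replace (IZR (Z.abs (Z.of_nat i - Z.of_nat j))) with (INR d)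
      by (rewrite INR_IZR_INZ; f_equal; unfold d; lia).
    rewrite minus_INR by (unfold d; lia).
    unfold Cscale, Cadd, Cmul, RtoC, C0; apply injective_projections; simpl; field; auto.
Qed.

Definition edge_row (n m l : nat) : nat := if Nat.ltb l m then l else (n - 2 * m + l)%nat.

Lemma edge_row_inj n m l l' : (2 * m <= n)%nat -> (l < 2 * m)%nat -> (l' < 2 * m)%nat ->
  edge_row n m l = edge_row n m l' -> l = l'.
Proof.
  intros Hn Hl Hl'. unfold edge_row.
  destruct (Nat.ltb_spec l m); destruct (Nat.ltb_spec l' m); lia.
Qed.

(* A matrix vanishing outside its first and last [m] rows is a sum of [2m]
   products [e_i (row i)]. *)
Lemma low_rank_of_edge_rows n m X : (2 * m <= n)%nat ->
  (forall i j, (i < n)%nat -> (j < n)%nat -> (m <= i < n - m)%nat -> X i j = C0) ->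
  low_rank n (2 * m) X.
Proof.
  intros Hn HX.
  exists (fun l i => if Nat.eqb i (edge_row n m l) then C1 else C0),
         (fun l j => Cconj (X (edge_row n m l) j)).
  intros i j Hi Hj.
  rewrite (Csum_ext (2 * m) _ (fun l => if Nat.eqb i (edge_row n m l) then X i j else C0))
    by (intros l _; destruct (Nat.eqb_spec i (edge_row n m l)); subst; cx_ring).
  destruct (le_lt_dec m i) as [H1|H1]; [destruct (lt_dec i (n - m)) as [H2|H2]|].
  - rewrite HX by lia.
    rewrite (Csum_ext (2 * m) _ (fun _ => C0)) by (intros; destruct (_ =? _); auto).
    symmetry; apply Csum_zero.
  - set (l0 := (i - (n - 2 * m))%nat).
    assert (Hrow : edge_row n m l0 = i)
      by (unfold edge_row, l0; destruct (Nat.ltb_spec (i - (n - 2 * m)) m); lia).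
    rewrite <- (Csum_delta (2 * m) l0 (X i j)) at 1 by (unfold l0; lia).
    apply Csum_ext; intros l Hl.
    destruct (Nat.eqb_spec i (edge_row n m l)); destruct (Nat.eqb_spec l l0) as [->|Hne]; auto.
    + exfalso. apply Hne. apply (edge_row_inj n m); auto; [unfold l0; lia | congruence].
    + congruence.
  - assert (Hrow : edge_row n m i = i) by (unfold edge_row; destruct (Nat.ltb_spec i m); lia).
    rewrite <- (Csum_delta (2 * m) i (X i j)) at 1 by lia.
    apply Csum_ext; intros l Hl.
    destruct (Nat.eqb_spec i (edge_row n m l)); destruct (Nat.eqb_spec l i) as [->|Hne]; auto.
    + exfalso. apply Hne. apply (edge_row_inj n m); auto; [lia | congruence].
    + congruence.
Qed.

Lemma opnorm_circ_band_le n m b beta : (0 < n)%nat -> 0 <= beta ->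
  (forall j, (Z.of_nat m < Z.abs j)%Z -> b j = C0) -> (forall d, Cmod (b d) <= beta) ->
  opnorm_le n (circ_band n b) (INR (2 * m + 1) * (INR m / INR n * beta)).
Proof.
  intros Hn Hbeta Hb Hbd. assert (Hn' : 0 < INR n) by (apply lt_0_INR; auto).
  assert (Hgam : 0 <= INR m / INR n * beta)
    by (apply Rmult_le_pos; auto; apply Rle_mult_inv_pos; auto; apply pos_INR).
  apply opnorm_banded_le; auto.
  - intros i j Hi Hj. unfold circ_band. set (d := (Z.of_nat i - Z.of_nat j)%Z).
    replace (Cscale (IZR (Z.abs d) / INR n) (b d)) with (Cmul (RtoC (IZR (Z.abs d) / INR n)) (b d))
      by cx_ring.
    assert (Hd0 : 0 <= IZR (Z.abs d)) by (apply IZR_le; lia).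
    rewrite Cmod_mul, Cmod_RtoC, Rabs_right by (apply Rle_ge, Rle_mult_inv_pos; auto).
    destruct (Z_le_gt_dec (Z.abs d) (Z.of_nat m)) as [Hd|Hd].
    + apply Rmult_le_compat; auto. apply Rle_mult_inv_pos; auto. apply Cmod_nonneg.
      apply Rmult_le_compat_r. left; apply Rinv_0_lt_compat; auto.
      rewrite INR_IZR_INZ. apply IZR_le. lia.
    + rewrite Hb, Cmod_C0, Rmult_0_r by lia. auto.
  - intros i j Hi Hj Hne. unfold circ_band in Hne.
    destruct (Z_le_gt_dec (Z.abs (Z.of_nat i - Z.of_nat j)) (Z.of_nat m)) as [Hd|Hd].
    + lia.
    + exfalso. apply Hne. rewrite Hb by lia. cx_ring.
Qed.

Lemma toeplitz_sub_opt_circulant_banded n m b beta : (2 * m < n)%nat -> 0 <= beta ->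
  (forall j, (Z.of_nat m < Z.abs j)%Z -> b j = C0) -> (forall d, Cmod (b d) <= beta) ->
  low_rank_plus_small n (2 * m) (INR (2 * m + 1) * INR m * beta / INR n)
    (msub (toeplitz b) (opt_circulant n b)).
Proof.
  intros Hn Hbeta Hb Hbd. exists (circ_corner n b), (circ_band n b). split; [|split].
  - intros i j _ _. unfold circ_corner, msub, madd, mscale. cx_ring.
  - apply low_rank_of_edge_rows. lia. apply circ_corner_middle_rows; auto.
  - eapply opnorm_mono; [|apply (opnorm_circ_band_le n m b beta); auto; lia].
    right. field. apply not_0_INR. lia.
Qed.

Lemma Cmod_le_Rsum_centered m (b : Z -> Cx) : (forall j, (Z.of_nat m < Z.abs j)%Z -> b j = C0) ->
  forall d, Cmod (b d) <= Rsum (2 * m + 1) (fun l => Cmod (b (centered m l))).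
Proof.
  intros Hb d. destruct (Z_le_gt_dec (Z.abs d) (Z.of_nat m)) as [Hd|Hd].
  - replace d with (centered m (Z.to_nat (d + Z.of_nat m))) at 1 by (unfold centered; lia).
    apply (Rsum_ge_term (2 * m + 1) (fun l => Cmod (b (centered m l)))). lia.
    intros; apply Cmod_nonneg.
  - rewrite Hb, Cmod_C0 by lia. apply Rsum_nonneg. intros; apply Cmod_nonneg.
Qed.

Lemma toeplitz_opnorm_bounded f a : in_C2pi f -> has_fourier_coeffs f a ->
  exists K, 0 <= K /\ forall n, opnorm_le n (toeplitz a) K.
Proof.
  intros [Hc1 [Hc2 _]] HF. unfold Cre, Cim in *. assert (HP := PI_RGT_0).
  destruct (continuity_bounded_pi _ Hc1) as [K1 [HK1 HB1]].
  destruct (continuity_bounded_pi _ Hc2) as [K2 [HK2 HB2]].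
  exists (K1 + K2). split; [lra|]. intros n. apply (opnorm_toeplitz_le f); auto; [lra|].
  intros t Ht. eapply Rle_trans. apply Cmod_le_abs_fst_snd.
  specialize (HB1 t ltac:(lra)). specialize (HB2 t ltac:(lra)). lra.
Qed.

Definition symbol_sub (a b : Z -> Cx) : Z -> Cx := fun k => Cadd (a k) (Cmul (RtoC (-1)) (b k)).

Lemma toeplitz_sub_opt_circulant_split n a b :
  msub (toeplitz a) (opt_circulant n a) =
  madd (msub (toeplitz b) (opt_circulant n b))
       (msub (toeplitz (symbol_sub a b)) (opt_circulant n (symbol_sub a b))).
Proof.
  extensionality i; extensionality j.
  unfold msub, madd, mscale, toeplitz, opt_circulant, circ_coeff, symbol_sub. cx_ring.
Qed.

(* Split [f] into its Fejér mean [p], handled by [toeplitz_sub_opt_circulant_banded],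
   and [f - p], whose Toeplitz matrix and optimal circulant are small. *)
Lemma toeplitz_sub_opt_circulant_lrps f a eta : in_C2pi f -> has_fourier_coeffs f a -> 0 < eta ->
  exists r N, forall n, (N < n)%nat ->
    low_rank_plus_small n r eta (msub (toeplitz a) (opt_circulant n a)).
Proof.
  intros Hf HF Heta. destruct (fejer_uniform_approx f a (eta / 4) Hf HF ltac:(lra)) as [m Hm].
  set (b := cesaro_coeffs m a).
  assert (Hbs : forall j, (Z.of_nat m < Z.abs j)%Z -> b j = C0)
    by (intros; apply cesaro_coeffs_out; auto).
  assert (Hsmall : forall n, opnorm_le n (toeplitz (symbol_sub a b)) (eta / 4)).
  { intros n. apply (opnorm_toeplitz_le (fun t => Cadd (f t) (Cmul (RtoC (-1)) (trig_poly m b t))));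
      auto; [|lra]. unfold symbol_sub. apply has_fourier_coeffs_add; auto.
    apply (has_fourier_coeffs_scale (trig_poly m b) b), has_fourier_coeffs_trig_poly; auto. }
  set (beta := Rsum (2 * m + 1) (fun l => Cmod (b (centered m l)))).
  assert (Hbeta : 0 <= beta) by (apply Rsum_nonneg; intros; apply Cmod_nonneg).
  set (A := INR (2 * m + 1) * INR m * beta).
  exists (2 * m)%nat, (Nat.max (2 * m) (Z.to_nat (up (2 * A / eta)))). intros n Hn.
  assert (Hn' : 0 < INR n) by (apply lt_0_INR; lia).
  assert (HA : A / INR n <= eta / 2).
  { assert (2 * A / eta <= INR n) by (apply le_INR_of_up_le; lia).
    apply Rmult_le_reg_r with (INR n * 2 / eta). apply Rdiv_lt_0_compat; lra.
    replace (A / INR n * (INR n * 2 / eta)) with (2 * A / eta) by (field; lra).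
    replace (eta / 2 * (INR n * 2 / eta)) with (INR n) by (field; lra). auto. }
  rewrite (toeplitz_sub_opt_circulant_split n a b), <- (Nat.add_0_r (2 * m)).
  replace eta with (eta / 2 + (eta / 4 + eta / 4)) by field.
  apply lrps_madd.
  - eapply lrps_mono; [reflexivity | exact HA |].
    apply toeplitz_sub_opt_circulant_banded; auto. lia. apply Cmod_le_Rsum_centered; auto.
  - apply lrps_of_opnorm_le, opnorm_msub; auto. apply opnorm_opt_circulant_le; auto; [lia | lra].
Qed.

Lemma normal_error_param C eps : 0 <= C -> 0 < eps ->
  exists eta, 0 < eta /\ C * eta + C * eta + C * eta * (C * eta) <= eps.
Proof.
  intros HC Heps. set (D := 2 * C + C * C + 1).
  exists (Rmin 1 (eps / D)).
  assert (HD : 0 < D) by (unfold D; nra).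
  assert (H1 := Rmin_l 1 (eps / D)). assert (H2 := Rmin_r 1 (eps / D)).
  assert (Hpos : 0 < Rmin 1 (eps / D)) by (apply Rmin_pos; [lra | apply Rdiv_lt_0_compat; lra]).
  split; auto. set (eta := Rmin 1 (eps / D)) in *.
  assert (D * eta <= eps) by (apply Rmult_le_reg_r with (/ D);
    [apply Rinv_0_lt_compat; lra | replace (D * eta * / D) with eta by (field; lra); exact H2]).
  assert (C * eta * (C * eta) <= C * C * eta) by (assert (0 <= C * C) by nra; nra).
  unfold D in *. nra.
Qed.

Theorem mainTheorem8
  (f : R -> Cx) (a : Z -> Cx)
  (sinA sinc sincinv : nat -> Mat) (Cst : R) :
  in_C2pi f ->
  (forall k : Z, is_fourier_coeff f k (a k)) ->
  (forall n : nat, (0 < n)%nat -> is_msin n (toeplitz a) (sinA n)) ->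
  (forall n : nat, (0 < n)%nat -> is_msin n (opt_circulant n a) (sinc n)) ->
  (forall n : nat, (0 < n)%nat -> is_inverse n (sinc n) (sincinv n)) ->
  (forall n : nat, (0 < n)%nat -> opnorm_le n (sincinv n) Cst) ->
  forall eps : R, 0 < eps ->
  exists N M : nat, (0 < N)%nat /\ (0 < M)%nat /\
    forall n : nat, (N < n)%nat ->
      exists Rb Eb : Mat,
        meq n
          (mmul n (madj (mmul n (sincinv n) (sinA n))) (mmul n (sincinv n) (sinA n)))
          (madd (madd mid Rb) Eb) /\
        rank_le n Rb (4 * M) /\
        opnorm_le n Eb eps.
Proof.
  intros Hf Ha HsinA Hsinc Hinv HCst eps Heps.
  apply has_fourier_coeffs_of_is_fourier_coeff in Ha.
  destruct (toeplitz_opnorm_bounded f a Hf Ha) as [K [HK HT]].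
  destruct (normal_error_param (Rabs Cst) eps (Rabs_pos Cst) Heps) as [eta [Heta Heps_eta]].
  destruct (msin_sub_lrps K eta HK Heta) as [q [e0 [He0 Hsin]]].
  destruct (toeplitz_sub_opt_circulant_lrps f a e0 Hf Ha He0) as [r [N HN]].
  exists (S N), (S (q * r)). split; [lia | split; [lia |]]. intros n Hn.
  assert (Hn0 : (0 < n)%nat) by lia.
  destruct (preconditioned_normal_lrps n (sincinv n) (sinc n) (sinA n) (q * r) (Rabs Cst) eta
              (Rabs_pos Cst) (Rlt_le _ _ Heta) (opnorm_mono n _ _ _ (Rle_abs Cst) (HCst n Hn0))
              (proj2 (Hinv n Hn0))
              (Hsin n r _ _ _ _ (HT n) (opnorm_opt_circulant_le n a K Hn0 HK (HT n))
                    (HsinA n Hn0) (Hsinc n Hn0) (HN n ltac:(lia))))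
    as [Rb [Eb [HE [HR HEb]]]].
  exists Rb, Eb. split; [|split].
  - intros i j Hi Hj. specialize (HE i j Hi Hj). unfold msub, madd, mscale in *.
    replace (Cadd (Cadd (mid i j) (Rb i j)) (Eb i j)) with (Cadd (mid i j) (Cadd (Rb i j) (Eb i j)))
      by cx_ring.
    rewrite <- HE. cx_ring.
  - apply rank_le_of_low_rank, (low_rank_mono n (4 * (q * r))); auto. lia.
  - eapply opnorm_mono; eauto.
Qed.
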